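(* Let $F:\mathcal C\to\mathcal D$ be a lax functor of bicategories and let $\mathcal E$ be a diagram of 2-cells in $\mathcal L(U\mathcal C)$ such that any two parallel composites in $\mathcal E$ have the same supporting map $u$. Then the image of $\mathcal E$ in $\mathcal D$ under the strict functor $\mathcal L(U\mathcal C)\to\mathcal D$ induced by $F$ commutes. The same holds for oplax functors (with the comparison maps reversed).
   Context: A graph is a directed graph; $U\mathcal C$ is the graph of 0-cells and 1-cells of a bicategory $\mathcal C$, and $\mathcal F(G)$ is the free bicategory on a graph $G$ (1-cells are parenthesized composable words in edges and formal units $I$; 2-cells are generated by whiskered formal associators and unitors modulo the bicategory axioms). Let $\mathbf{Lax}_1$ be the category whose objects are lax functors $F:\mathcal C\to\mathcal D$ (with unit comparisons $i:I_{FA}\to F(I_A)$ and composition comparisons $m:F(X)\odot F(Y)\to F(X\odot Y)$) and whose morphisms are pairs of strict functors forming a strictly commuting square. The functor $\mathbf{Lax}_1\to\mathbf{Graph}$, $F\mapsto U\mathcal C$, has a left adjoint sending $G$ to a lax functor $\Phi_G:\mathcal F(G)\to\mathcal L(G)$. Explicitly, the 0-cells of $\mathcal L(G)$ are the vertices of $G$; its 1-cells are parenthesizations of words $W_1\odot\cdots\odot W_\ell$ where each $W_j$ is either a formal unit $I$ or a term $\Phi(w)$ with $w$ a 1-cell of $\mathcal F(G)$ (a $\Phi$-term), the total string of edges being composable; its 2-cells are generated by associators/unitors of $\mathcal F(G)$ applied inside $\Phi$-terms, associators/unitors applied to the outer word, $i:I\to\Phi(I)$ and $m:\Phi(w)\odot\Phi(w')\to\Phi(w\odot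 w')$ applied to any subword, modulo the relations making $\mathcal L(G)$ a bicategory and $\Phi_G$ a lax functor (pentagon, triangle, lax-functor unit and associativity coherence, interchange, naturality). By the universal property, $F$ induces a unique strict functor $\mathcal L(U\mathcal C)\to\mathcal D$ with $\mathcal L(U\mathcal C)\to\mathcal D$ composed with $\Phi_{U\mathcal C}$ equal to $F$ composed with the counit $\mathcal F(U\mathcal C)\to\mathcal C$; diagrams in $\mathcal D$ in its image are the formal diagrams for $F$. Supporting map: each hom-category of $\mathcal L(G)$ maps to the category $\Delta$ of finite totally ordered sets $\underline k=\{1,\dots,k\}$ ($k\ge0$) and order-preserving maps, sending a 1-cell with $k$ $\Phi$-terms to $\underline k$; a generating 2-cell is sent to the map recording which target $\Phi$-term each source $\Phi$-term lands in: associators and unitors go to identities, $i$ creating a new $\Phi$-term in position $j$ goes to the coface $d^j:\underline{k-1}\to\underline k$ (the injection missing $j$), and $m$ merging the $j$-th and $(j+1)$-st $\Phi$-terms goes to the codegeneracy $s^j:\underline{k+1}\to\underline k$ (the surjection identifying $j,j+1$). This respects the relations and gives a functor; the image $u(\phi)$ of a 2-cell $\phi$ is its supporting map. *)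

(* Convention: horizontal composition is written in diagrammatic order,
   hcomp1 (X : hom a b) (Y : hom b c) : hom a c  ("X ⊙ Y"), and vertical
   composition vcomp (α : f ⇒ g) (β : g ⇒ h) : f ⇒ h is also diagrammatic. *)
From Stdlib Require Import Arith.

Set Implicit Arguments.
Unset Strict Implicit.

Record Bicat : Type := {
  ob : Type;
  hom : ob -> ob -> Type;
  cell : forall {a b : ob}, hom a b -> hom a b -> Type;
  id2 : forall {a b : ob} (f : hom a b), cell f f;
  vcomp : forall {a b : ob} {f g h : hom a b}, cell f g -> cell g h -> cell f h;
  id1 : forall (a : ob), hom a a;
  hcomp1 : forall {a b c : ob}, hom a b -> hom b c -> hom a c;
  hcomp2 : forall {a b c : ob} {f f' : hom a b} {g g' : hom b c},
      cell f f' -> cell g g' -> cell (hcomp1 f g) (hcomp1 f' g');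
  assoc : forall {a b c d : ob} (f : hom a b) (g : hom b c) (h : hom c d),
      cell (hcomp1 (hcomp1 f g) h) (hcomp1 f (hcomp1 g h));
  assoc_inv : forall {a b c d : ob} (f : hom a b) (g : hom b c) (h : hom c d),
      cell (hcomp1 f (hcomp1 g h)) (hcomp1 (hcomp1 f g) h);
  lunit : forall {a b : ob} (f : hom a b), cell (hcomp1 (id1 a) f) f;
  lunit_inv : forall {a b : ob} (f : hom a b), cell f (hcomp1 (id1 a) f);
  runit : forall {a b : ob} (f : hom a b), cell (hcomp1 f (id1 b)) f;
  runit_inv : forall {a b : ob} (f : hom a b), cell f (hcomp1 f (id1 b));
  vcomp_id_l : forall a b (f g : hom a b) (x : cell f g), vcomp (id2 f) x = x;
  vcomp_id_r : forall a b (f g : hom a b) (x : cell f g), vcomp x (id2 g) = x;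
  vcomp_assoc : forall a b (f g h k : hom a b) (x : cell f g) (y : cell g h)
      (z : cell h k), vcomp (vcomp x y) z = vcomp x (vcomp y z);
  hcomp2_id : forall a b c (f : hom a b) (g : hom b c),
      hcomp2 (id2 f) (id2 g) = id2 (hcomp1 f g);
  interchange : forall a b c (f f' f'' : hom a b) (g g' g'' : hom b c)
      (x : cell f f') (x' : cell f' f'') (y : cell g g') (y' : cell g' g''),
      hcomp2 (vcomp x x') (vcomp y y') = vcomp (hcomp2 x y) (hcomp2 x' y');
  assoc_nat : forall a b c d (f f' : hom a b) (g g' : hom b c) (h h' : hom c d)
      (x : cell f f') (y : cell g g') (z : cell h h'),
      vcomp (hcomp2 (hcomp2 x y) z) (assoc f' g' h')
      = vcomp (assoc f g h) (hcomp2 x (hcomp2 y z));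
  lunit_nat : forall a b (f f' : hom a b) (x : cell f f'),
      vcomp (hcomp2 (id2 (id1 a)) x) (lunit f') = vcomp (lunit f) x;
  runit_nat : forall a b (f f' : hom a b) (x : cell f f'),
      vcomp (hcomp2 x (id2 (id1 b))) (runit f') = vcomp (runit f) x;
  assoc_inv_l : forall a b c d (f : hom a b) (g : hom b c) (h : hom c d),
      vcomp (assoc f g h) (assoc_inv f g h) = id2 _;
  assoc_inv_r : forall a b c d (f : hom a b) (g : hom b c) (h : hom c d),
      vcomp (assoc_inv f g h) (assoc f g h) = id2 _;
  lunit_inv_l : forall a b (f : hom a b), vcomp (lunit f) (lunit_inv f) = id2 _;
  lunit_inv_r : forall a b (f : hom a b), vcomp (lunit_inv f) (lunit f) = id2 _;
  runit_inv_l : forall a b (f : hom a b), vcomp (runit f) (runit_inv f) = id2 _;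
  runit_inv_r : forall a b (f : hom a b), vcomp (runit_inv f) (runit f) = id2 _;
  pentagon : forall a b c d e (f : hom a b) (g : hom b c) (h : hom c d) (k : hom d e),
      vcomp (vcomp (hcomp2 (assoc f g h) (id2 k)) (assoc f (hcomp1 g h) k))
            (hcomp2 (id2 f) (assoc g h k))
      = vcomp (assoc (hcomp1 f g) h k) (assoc f g (hcomp1 h k));
  triangle : forall a b c (f : hom a b) (g : hom b c),
      vcomp (assoc f (id1 b) g) (hcomp2 (id2 f) (lunit g))
      = hcomp2 (runit f) (id2 g)
}.
Arguments hom : clear implicits.


Record LaxFunctor (C D : Bicat) : Type := {
  F0 : ob C -> ob D;
  F1 : forall {a b : ob C}, hom C a b -> hom D (F0 a) (F0 b);
  F2 : forall {a b : ob C} {f g : hom C a b}, cell f g -> cell (F1 f) (F1 g);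
  F2_id : forall a b (f : hom C a b), F2 (id2 f) = id2 (F1 f);
  F2_comp : forall a b (f g h : hom C a b) (x : cell f g) (y : cell g h),
      F2 (vcomp x y) = vcomp (F2 x) (F2 y);
  lax_i : forall (a : ob C), cell (id1 (F0 a)) (F1 (id1 a));
  lax_m : forall {a b c : ob C} (f : hom C a b) (g : hom C b c),
      cell (hcomp1 (F1 f) (F1 g)) (F1 (hcomp1 f g));
  lax_m_nat : forall a b c (f f' : hom C a b) (g g' : hom C b c)
      (x : cell f f') (y : cell g g'),
      vcomp (hcomp2 (F2 x) (F2 y)) (lax_m f' g') = vcomp (lax_m f g) (F2 (hcomp2 x y));
  lax_assoc : forall a b c d (f : hom C a b) (g : hom C b c) (h : hom C c d),
      vcomp (vcomp (hcomp2 (lax_m f g) (id2 (F1 h))) (lax_m (hcomp1 f g) h))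
            (F2 (assoc f g h))
      = vcomp (vcomp (assoc (F1 f) (F1 g) (F1 h)) (hcomp2 (id2 (F1 f)) (lax_m g h)))
              (lax_m f (hcomp1 g h));
  lax_lunit : forall a b (f : hom C a b),
      vcomp (vcomp (hcomp2 (lax_i a) (id2 (F1 f))) (lax_m (id1 a) f)) (F2 (lunit f))
      = lunit (F1 f);
  lax_runit : forall a b (f : hom C a b),
      vcomp (vcomp (hcomp2 (id2 (F1 f)) (lax_i b)) (lax_m f (id1 b))) (F2 (runit f))
      = runit (F1 f)
}.

Record OplaxFunctor (C D : Bicat) : Type := {
  oF0 : ob C -> ob D;
  oF1 : forall {a b : ob C}, hom C a b -> hom D (oF0 a) (oF0 b);
  oF2 : forall {a b : ob C} {f g : hom C a b}, cell f g -> cell (oF1 f) (oF1 g);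
  oF2_id : forall a b (f : hom C a b), oF2 (id2 f) = id2 (oF1 f);
  oF2_comp : forall a b (f g h : hom C a b) (x : cell f g) (y : cell g h),
      oF2 (vcomp x y) = vcomp (oF2 x) (oF2 y);
  oplax_i : forall (a : ob C), cell (oF1 (id1 a)) (id1 (oF0 a));
  oplax_m : forall {a b c : ob C} (f : hom C a b) (g : hom C b c),
      cell (oF1 (hcomp1 f g)) (hcomp1 (oF1 f) (oF1 g));
  oplax_m_nat : forall a b c (f f' : hom C a b) (g g' : hom C b c)
      (x : cell f f') (y : cell g g'),
      vcomp (oF2 (hcomp2 x y)) (oplax_m f' g') = vcomp (oplax_m f g) (hcomp2 (oF2 x) (oF2 y));
  oplax_assoc : forall a b c d (f : hom C a b) (g : hom C b c) (h : hom C c d),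
      vcomp (vcomp (oF2 (assoc f g h)) (oplax_m f (hcomp1 g h)))
            (hcomp2 (id2 (oF1 f)) (oplax_m g h))
      = vcomp (vcomp (oplax_m (hcomp1 f g) h) (hcomp2 (oplax_m f g) (id2 (oF1 h))))
              (assoc (oF1 f) (oF1 g) (oF1 h));
  oplax_lunit : forall a b (f : hom C a b),
      vcomp (vcomp (oF2 (lunit_inv f)) (oplax_m (id1 a) f))
            (hcomp2 (oplax_i a) (id2 (oF1 f)))
      = lunit_inv (oF1 f);
  oplax_runit : forall a b (f : hom C a b),
      vcomp (vcomp (oF2 (runit_inv f)) (oplax_m f (id1 b)))
            (hcomp2 (id2 (oF1 f)) (oplax_i b))
      = runit_inv (oF1 f)
}.

Record Graph : Type := { vert : Type; edge : vert -> vert -> Type }.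
Arguments edge : clear implicits.

Definition UG (C : Bicat) : Graph := {| vert := ob C; edge := hom C |}.

(** * The free bicategory F(G): 1-cells (parenthesized words) and
      2-cell terms (generated by associators/unitors; 2-cells of F(G)
      are equivalence classes of these terms) *)

Unset Implicit Arguments.
Inductive FWord (G : Graph) : vert G -> vert G -> Type :=
| fedge : forall a b, edge G a b -> FWord G a b
| funit : forall a, FWord G a a
| fcomp : forall a b c, FWord G a b -> FWord G b c -> FWord G a c.
Set Implicit Arguments.

Arguments fedge {G a b} _.
Arguments funit {G} a.
Arguments fcomp {G a b c} _ _.

Unset Implicit Arguments.
Inductive FCell (G : Graph) : forall a b, FWord G a b -> FWord G a b -> Type :=
| fc_id : forall a b (w : FWord G a b), FCell G _ _ w w
| fc_v : forall a b (w w' w'' : FWord G a b), FCell G _ _ w w' -> FCell G _ _ w' w'' -> FCell G _ _ w w''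
| fc_h : forall a b c (w w' : FWord G a b) (v v' : FWord G b c),
    FCell G _ _ w w' -> FCell G _ _ v v' -> FCell G _ _ (fcomp w v) (fcomp w' v')
| fc_assoc : forall a b c d (w : FWord G a b) (v : FWord G b c) (x : FWord G c d),
    FCell G _ _ (fcomp (fcomp w v) x) (fcomp w (fcomp v x))
| fc_assoc_inv : forall a b c d (w : FWord G a b) (v : FWord G b c) (x : FWord G c d),
    FCell G _ _ (fcomp w (fcomp v x)) (fcomp (fcomp w v) x)
| fc_lunit : forall a b (w : FWord G a b), FCell G _ _ (fcomp (funit a) w) w
| fc_lunit_inv : forall a b (w : FWord G a b), FCell G _ _ w (fcomp (funit a) w)
| fc_runit : forall a b (w : FWord G a b), FCell G _ _ (fcomp w (funit b)) w
| fc_runit_inv : forall a b (w : FWord G a b), FCell G _ _ w (fcomp w (funit b)).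
Set Implicit Arguments.
Arguments FCell {G a b} _ _.

(** Counit F(U C) -> C *)
Fixpoint evF1 (C : Bicat) (a b : ob C) (w : FWord (UG C) a b) : hom C a b :=
  match w in FWord _ a b return hom C a b with
  | fedge e => e
  | funit a => id1 a
  | fcomp w v => hcomp1 (evF1 w) (evF1 v)
  end.

Fixpoint evF2 (C : Bicat) (a b : ob C) (w w' : FWord (UG C) a b)
  (x : FCell w w') : cell (evF1 w) (evF1 w') :=
  match x in FCell w w' return cell (evF1 w) (evF1 w') with
  | fc_id _ _ _ w => id2 _
  | fc_v _ _ _ _ _ _ x y => vcomp (evF2 x) (evF2 y)
  | fc_h _ _ _ _ _ _ _ _ x y => hcomp2 (evF2 x) (evF2 y)
  | fc_assoc _ _ _ _ _ w v x => assoc _ _ _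
  | fc_assoc_inv _ _ _ _ _ w v x => assoc_inv _ _ _
  | fc_lunit _ _ _ w => lunit _
  | fc_lunit_inv _ _ _ w => lunit_inv _
  | fc_runit _ _ _ w => runit _
  | fc_runit_inv _ _ _ w => runit_inv _
  end.

(** * The bicategory L(G): 1-cells are parenthesized words in Φ-terms
      Φ(w) and formal units I *)

Unset Implicit Arguments.
Inductive LWord (G : Graph) : vert G -> vert G -> Type :=
| lphi : forall a b, FWord G a b -> LWord G a b
| lunitw : forall a, LWord G a a
| lcomp : forall a b c, LWord G a b -> LWord G b c -> LWord G a c.
Set Implicit Arguments.

Arguments lphi {G a b} _.
Arguments lunitw {G} a.
Arguments lcomp {G a b c} _ _.

Fixpoint nphi (G : Graph) (a b : vert G) (l : LWord G a b) : nat :=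
  match l with
  | lphi _ => 1
  | lunitw _ => 0
  | lcomp l1 l2 => nphi l1 + nphi l2
  end.

(** 2-cell terms of L(G) for the lax case (2-cells of L(G) are classes of
    these terms modulo the relations listed in the paper).  Generators:
    Φ applied to 2-cells of F(G), outer associators/unitors, i and m;
    applying i or m to a subword is expressed by horizontal composition
    with identities. *)
Unset Implicit Arguments.
Inductive LCell (G : Graph) : forall a b, LWord G a b -> LWord G a b -> Type :=
| lc_id : forall a b (l : LWord G a b), LCell G _ _ l l
| lc_v : forall a b (l l' l'' : LWord G a b), LCell G _ _ l l' -> LCell G _ _ l' l'' -> LCell G _ _ l l''
| lc_h : forall a b c (l l' : LWord G a b) (k k' : LWord G b c),
    LCell G _ _ l l' -> LCell G _ _ k k' -> LCell G _ _ (lcomp l k) (lcomp l' k')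
| lc_assoc : forall a b c d (l : LWord G a b) (k : LWord G b c) (j : LWord G c d),
    LCell G _ _ (lcomp (lcomp l k) j) (lcomp l (lcomp k j))
| lc_assoc_inv : forall a b c d (l : LWord G a b) (k : LWord G b c) (j : LWord G c d),
    LCell G _ _ (lcomp l (lcomp k j)) (lcomp (lcomp l k) j)
| lc_lunit : forall a b (l : LWord G a b), LCell G _ _ (lcomp (lunitw a) l) l
| lc_lunit_inv : forall a b (l : LWord G a b), LCell G _ _ l (lcomp (lunitw a) l)
| lc_runit : forall a b (l : LWord G a b), LCell G _ _ (lcomp l (lunitw b)) l
| lc_runit_inv : forall a b (l : LWord G a b), LCell G _ _ l (lcomp l (lunitw b))
| lc_Phi : forall a b (w w' : FWord G a b), FCell w w' -> LCell G _ _ (lphi w) (lphi w')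
| lc_i : forall a, LCell G _ _ (lunitw a) (lphi (funit a))
| lc_m : forall a b c (w : FWord G a b) (v : FWord G b c),
    LCell G _ _ (lcomp (lphi w) (lphi v)) (lphi (fcomp w v)).
Set Implicit Arguments.
Arguments LCell {G a b} _ _.

Unset Implicit Arguments.
Inductive LCellOp (G : Graph) : forall a b, LWord G a b -> LWord G a b -> Type :=
| lo_id : forall a b (l : LWord G a b), LCellOp G _ _ l l
| lo_v : forall a b (l l' l'' : LWord G a b), LCellOp G _ _ l l' -> LCellOp G _ _ l' l'' -> LCellOp G _ _ l l''
| lo_h : forall a b c (l l' : LWord G a b) (k k' : LWord G b c),
    LCellOp G _ _ l l' -> LCellOp G _ _ k k' -> LCellOp G _ _ (lcomp l k) (lcomp l' k')
| lo_assoc : forall a b c d (l : LWord G a b) (k : LWord G b c) (j : LWord G c d),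
    LCellOp G _ _ (lcomp (lcomp l k) j) (lcomp l (lcomp k j))
| lo_assoc_inv : forall a b c d (l : LWord G a b) (k : LWord G b c) (j : LWord G c d),
    LCellOp G _ _ (lcomp l (lcomp k j)) (lcomp (lcomp l k) j)
| lo_lunit : forall a b (l : LWord G a b), LCellOp G _ _ (lcomp (lunitw a) l) l
| lo_lunit_inv : forall a b (l : LWord G a b), LCellOp G _ _ l (lcomp (lunitw a) l)
| lo_runit : forall a b (l : LWord G a b), LCellOp G _ _ (lcomp l (lunitw b)) l
| lo_runit_inv : forall a b (l : LWord G a b), LCellOp G _ _ l (lcomp l (lunitw b))
| lo_Phi : forall a b (w w' : FWord G a b), FCell w w' -> LCellOp G _ _ (lphi w) (lphi w')
| lo_i : forall a, LCellOp G _ _ (lphi (funit a)) (lunitw a)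
| lo_m : forall a b c (w : FWord G a b) (v : FWord G b c),
    LCellOp G _ _ (lphi (fcomp w v)) (lcomp (lphi w) (lphi v)).
Set Implicit Arguments.
Arguments LCellOp {G a b} _ _.

(** A map in Δ from k to k' (order preserving map
      {1..k} -> {1..k'}) is represented by a function nat -> nat, read
      0-based and only on arguments i < k; two such maps are equal iff
      they agree on all i < k. *)

Fixpoint supp (G : Graph) (a b : vert G) (l l' : LWord G a b) (x : LCell l l')
  : nat -> nat :=
  match x with
  | lc_id _ _ _ _ => fun i => i
  | lc_v _ _ _ _ _ _ x y => fun i => supp y (supp x i)
  | lc_h _ _ _ _ l l' _ _ x y => fun i =>
      if i <? nphi l then supp x i else nphi l' + supp y (i - nphi l)
  | lc_assoc _ _ _ _ _ _ _ _ => fun i => i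
  | lc_assoc_inv _ _ _ _ _ _ _ _ => fun i => i
  | lc_lunit _ _ _ _ => fun i => i
  | lc_lunit_inv _ _ _ _ => fun i => i
  | lc_runit _ _ _ _ => fun i => i
  | lc_runit_inv _ _ _ _ => fun i => i
  | lc_Phi _ _ _ _ _ _ => fun i => i
  | lc_i _ _ => fun i => i                 (* coface: empty domain *)
  | lc_m _ _ _ _ _ _ => fun _ => 0         (* codegeneracy 2 -> 1 *)
  end.

(** oplax case: comparison maps reversed, so the supporting map lives in
    Δ^op: u(φ) : nphi target -> nphi source. *)
Fixpoint suppOp (G : Graph) (a b : vert G) (l l' : LWord G a b) (x : LCellOp l l')
  : nat -> nat :=
  match x with
  | lo_id _ _ _ _ => fun i => i
  | lo_v _ _ _ _ _ _ x y => fun i => suppOp x (suppOp y i)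
  | lo_h _ _ _ _ l l' _ _ x y => fun i =>
      if i <? nphi l' then suppOp x i else nphi l + suppOp y (i - nphi l')
  | lo_assoc _ _ _ _ _ _ _ _ => fun i => i
  | lo_assoc_inv _ _ _ _ _ _ _ _ => fun i => i
  | lo_lunit _ _ _ _ => fun i => i
  | lo_lunit_inv _ _ _ _ => fun i => i
  | lo_runit _ _ _ _ => fun i => i
  | lo_runit_inv _ _ _ _ => fun i => i
  | lo_Phi _ _ _ _ _ _ => fun i => i
  | lo_i _ _ => fun i => i
  | lo_m _ _ _ _ _ _ => fun _ => 0
  end.

(** * The strict functor L(U C) -> D induced by a lax functor F, i.e. the
      unique strict functor whose composite with Φ is F ∘ counit. *)

Section Induced.
Variables (C D : Bicat).

Fixpoint evL1 (F : LaxFunctor C D) (a b : ob C) (l : LWord (UG C) a b)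
  : hom D (F0 F a) (F0 F b) :=
  match l in LWord _ a b return hom D (F0 F a) (F0 F b) with
  | lphi w => F1 F (evF1 w)
  | lunitw a => id1 (F0 F a)
  | lcomp l k => hcomp1 (evL1 F l) (evL1 F k)
  end.

Fixpoint evL2 (F : LaxFunctor C D) (a b : ob C) (l l' : LWord (UG C) a b)
  (x : LCell l l') : cell (evL1 F l) (evL1 F l') :=
  match x in LCell l l' return cell (evL1 F l) (evL1 F l') with
  | lc_id _ _ _ _ => id2 _
  | lc_v _ _ _ _ _ _ x y => vcomp (evL2 F x) (evL2 F y)
  | lc_h _ _ _ _ _ _ _ _ x y => hcomp2 (evL2 F x) (evL2 F y)
  | lc_assoc _ _ _ _ _ _ _ _ => assoc _ _ _
  | lc_assoc_inv _ _ _ _ _ _ _ _ => assoc_inv _ _ _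
  | lc_lunit _ _ _ _ => lunit _
  | lc_lunit_inv _ _ _ _ => lunit_inv _
  | lc_runit _ _ _ _ => runit _
  | lc_runit_inv _ _ _ _ => runit_inv _
  | lc_Phi _ _ _ _ _ x => F2 F (evF2 x)
  | lc_i _ a => lax_i F a
  | lc_m _ _ _ _ w v => lax_m F (evF1 w) (evF1 v)
  end.

Fixpoint evLo1 (F : OplaxFunctor C D) (a b : ob C) (l : LWord (UG C) a b)
  : hom D (oF0 F a) (oF0 F b) :=
  match l in LWord _ a b return hom D (oF0 F a) (oF0 F b) with
  | lphi w => oF1 F (evF1 w)
  | lunitw a => id1 (oF0 F a)
  | lcomp l k => hcomp1 (evLo1 F l) (evLo1 F k)
  end.

Fixpoint evLo2 (F : OplaxFunctor C D) (a b : ob C) (l l' : LWord (UG C) a b)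
  (x : LCellOp l l') : cell (evLo1 F l) (evLo1 F l') :=
  match x in LCellOp l l' return cell (evLo1 F l) (evLo1 F l') with
  | lo_id _ _ _ _ => id2 _
  | lo_v _ _ _ _ _ _ x y => vcomp (evLo2 F x) (evLo2 F y)
  | lo_h _ _ _ _ _ _ _ _ x y => hcomp2 (evLo2 F x) (evLo2 F y)
  | lo_assoc _ _ _ _ _ _ _ _ => assoc _ _ _
  | lo_assoc_inv _ _ _ _ _ _ _ _ => assoc_inv _ _ _
  | lo_lunit _ _ _ _ => lunit _
  | lo_lunit_inv _ _ _ _ => lunit_inv _
  | lo_runit _ _ _ _ => runit _
  | lo_runit_inv _ _ _ _ => runit_inv _
  | lo_Phi _ _ _ _ _ x => oF2 F (evF2 x)
  | lo_i _ a => oplax_i F a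
  | lo_m _ _ _ _ w v => oplax_m F (evF1 w) (evF1 v)
  end.

End Induced.

(** In
    [LaxNormalForm] a word [l] with indices [gs] is normalized into a stack
    [F(w_1) ⊙ ... ⊙ F(w_n)] (Φ-terms with equal index merged by [m], empty
    groups filled by [i]); every generator commutes with normalization up to
    a structural cell between stacks, such cells are unique by coherence, and
    normalizing cells are split monic, which proves the lax case.  The oplax
    case follows by reversing 2-cells ([Duality]). *)

From Stdlib Require Import Arith List Lia ProofIrrelevance Eqdep.
Import ListNotations.

Notation "x >> y" := (vcomp x y) (at level 40, left associativity).
Notation "x ** y" := (hcomp2 x y) (at level 35, right associativity).

Section BicatAlgebra.
Context {B : Bicat}.

Lemma vcompA {a b} {f g h k : hom B a b} (x : cell f g) (y : cell g h) (z : cell h k) :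
  x >> y >> z = x >> (y >> z).
Proof. apply vcomp_assoc. Qed.

Lemma vcomp1l {a b} {f g : hom B a b} (x : cell f g) : id2 f >> x = x.
Proof. apply vcomp_id_l. Qed.

Lemma vcomp1r {a b} {f g : hom B a b} (x : cell f g) : x >> id2 g = x.
Proof. apply vcomp_id_r. Qed.

Lemma hcomp_id {a b c} (f : hom B a b) (g : hom B b c) : id2 f ** id2 g = id2 (hcomp1 f g).
Proof. apply hcomp2_id. Qed.

Lemma interchange2 {a b c} {f f' f'' : hom B a b} {g g' g'' : hom B b c}
  (x : cell f f') (x' : cell f' f'') (y : cell g g') (y' : cell g' g'') :
  (x >> x') ** (y >> y') = (x ** y) >> (x' ** y').
Proof. apply interchange. Qed.

Lemma whisk_l {a b c} {f : hom B a b} {g g' g'' : hom B b c} (y : cell g g') (y' : cell g' g'') :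
  id2 f ** (y >> y') = (id2 f ** y) >> (id2 f ** y').
Proof. rewrite <- interchange2, vcomp1l. reflexivity. Qed.

Lemma whisk_r {a b c} {f f' f'' : hom B a b} {g : hom B b c} (x : cell f f') (x' : cell f' f'') :
  (x >> x') ** id2 g = (x ** id2 g) >> (x' ** id2 g).
Proof. rewrite <- interchange2, vcomp1l. reflexivity. Qed.

Lemma split_lr {a b c} {f f' : hom B a b} {g g' : hom B b c} (x : cell f f') (y : cell g g') :
  x ** y = (x ** id2 g) >> (id2 f' ** y).
Proof. rewrite <- interchange2, vcomp1l, vcomp1r. reflexivity. Qed.

Lemma split_rl {a b c} {f f' : hom B a b} {g g' : hom B b c} (x : cell f f') (y : cell g g') :
  x ** y = (id2 f ** y) >> (x ** id2 g').
Proof. rewrite <- interchange2, vcomp1l, vcomp1r. reflexivity. Qed.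

Lemma whisk_commute {a b c} {f f' : hom B a b} {g g' : hom B b c} (x : cell f f') (y : cell g g') :
  (x ** id2 g) >> (id2 f' ** y) = (id2 f ** y) >> (x ** id2 g').
Proof. rewrite <- split_lr, <- split_rl. reflexivity. Qed.

Lemma assoc_inv_nat {a b c d} {f f' : hom B a b} {g g' : hom B b c} {h h' : hom B c d}
  (x : cell f f') (y : cell g g') (z : cell h h') :
  (x ** (y ** z)) >> assoc_inv f' g' h' = assoc_inv f g h >> ((x ** y) ** z).
Proof.
  rewrite <- (vcomp1l (x ** (y ** z))), <- (assoc_inv_r f g h), !vcompA.
  rewrite <- (vcompA (assoc f g h)), <- assoc_nat, !vcompA, assoc_inv_l, vcomp1r.
  reflexivity.
Qed.

Lemma lunit_inv_nat {a b} {f f' : hom B a b} (x : cell f f') :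
  x >> lunit_inv f' = lunit_inv f >> (id2 (id1 a) ** x).
Proof.
  rewrite <- (vcomp1l x) at 1. rewrite <- (lunit_inv_r f), !vcompA.
  rewrite <- (vcompA (lunit f)), <- lunit_nat, !vcompA, lunit_inv_l, vcomp1r. reflexivity.
Qed.

Lemma runit_inv_nat {a b} {f f' : hom B a b} (x : cell f f') :
  x >> runit_inv f' = runit_inv f >> (x ** id2 (id1 b)).
Proof.
  rewrite <- (vcomp1l x) at 1. rewrite <- (runit_inv_r f), !vcompA.
  rewrite <- (vcompA (runit f)), <- runit_nat, !vcompA, runit_inv_l, vcomp1r. reflexivity.
Qed.

Lemma cancel_assoc_r {a b c d} {X : hom B a d} {f : hom B a b} {g : hom B b c} {h : hom B c d}
  (u v : cell X (hcomp1 (hcomp1 f g) h)) : u >> assoc f g h = v >> assoc f g h -> u = v.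
Proof.
  intro H. rewrite <- (vcomp1r u), <- (vcomp1r v), <- (assoc_inv_l f g h), <- !vcompA, H.
  reflexivity.
Qed.

(** Whiskering by an identity 1-cell is faithful (conjugate by the unitor). *)
Lemma whisk_r_id_faithful {a b} {f g : hom B a b} (x y : cell f g) :
  x ** id2 (id1 b) = y ** id2 (id1 b) -> x = y.
Proof.
  intro H.
  assert (E : forall z : cell f g, z = runit_inv f >> (z ** id2 (id1 b)) >> runit g).
  { intro z. rewrite vcompA, runit_nat, <- vcompA, runit_inv_r, vcomp1l. reflexivity. }
  rewrite (E x), (E y), H. reflexivity.
Qed.

Lemma whisk_l_id_faithful {a b} {f g : hom B a b} (x y : cell f g) :
  id2 (id1 a) ** x = id2 (id1 a) ** y -> x = y.
Proof.
  intro H.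
  assert (E : forall z : cell f g, z = lunit_inv f >> (id2 (id1 a) ** z) >> lunit g).
  { intro z. rewrite vcompA, lunit_nat, <- vcompA, lunit_inv_r, vcomp1l. reflexivity. }
  rewrite (E x), (E y), H. reflexivity.
Qed.

Lemma kelly_runit {a b c} (f : hom B a b) (g : hom B b c) :
  assoc f g (id1 c) >> (id2 f ** runit g) = runit (hcomp1 f g).
Proof.
  apply whisk_r_id_faithful. apply cancel_assoc_r.
  rewrite whisk_r, vcompA, assoc_nat, <- (triangle g (id1 c)), whisk_l.
  rewrite <- (vcompA (assoc f _ _)), <- !vcompA, pentagon.
  rewrite vcompA, <- assoc_nat, hcomp_id, <- vcompA, triangle. reflexivity.
Qed.

Lemma inv_unique {a b} {f g : hom B a b} (p : cell f g) (u v : cell g f) :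
  p >> u = id2 f -> v >> p = id2 g -> u = v.
Proof. intros H1 H2. rewrite <- (vcomp1l u), <- H2, vcompA, H1, vcomp1r. reflexivity. Qed.

Lemma pentagon_inv {a b c d e} (f : hom B a b) (g : hom B b c) (h : hom B c d) (k : hom B d e) :
  assoc_inv f g (hcomp1 h k) >> assoc_inv (hcomp1 f g) h k
  = (id2 f ** assoc_inv g h k) >> assoc_inv f (hcomp1 g h) k >> (assoc_inv f g h ** id2 k).
Proof.
  apply (inv_unique (assoc (hcomp1 f g) h k >> assoc f g (hcomp1 h k))).
  - rewrite !vcompA, <- (vcompA (assoc f g _)), assoc_inv_l, vcomp1l, assoc_inv_l.
    reflexivity.
  - rewrite <- pentagon, !vcompA.
    rewrite <- (vcompA (assoc_inv f g h ** id2 k)), <- whisk_r, assoc_inv_r, hcomp_id, vcomp1l.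
    rewrite <- (vcompA (assoc_inv f (hcomp1 g h) k)), assoc_inv_r, vcomp1l.
    rewrite <- whisk_l, assoc_inv_r, hcomp_id. reflexivity.
Qed.

Lemma triangle_inv {a b c} (f : hom B a b) (g : hom B b c) :
  (runit_inv f ** id2 g) >> assoc f (id1 b) g = id2 f ** lunit_inv g.
Proof.
  rewrite <- (vcomp1r (_ >> _)), <- (hcomp_id f (hcomp1 (id1 b) g)), <- (lunit_inv_l g).
  rewrite whisk_l, <- !vcompA, (vcompA _ (assoc _ _ _)), triangle, <- whisk_r.
  rewrite runit_inv_r, hcomp_id, vcomp1l. reflexivity.
Qed.

(** Cells of the shape "re-associate to the left, then act on the left
    factor" absorb the structure cells acting on the right factor.  These are
    the identities behind the naturality of right-normalizing cells. *)
Lemma absorb_assoc {a0 a b c d} (X : hom B a0 a) (l : hom B a b) (k : hom B b c) (j : hom B c d)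
  {Y : hom B a0 b} {Z : hom B a0 c} {W : hom B a0 d}
  (A : cell (hcomp1 X l) Y) (Bc : cell (hcomp1 Y k) Z) (Cc : cell (hcomp1 Z j) W) :
  (id2 X ** assoc l k j) >> (assoc_inv X l (hcomp1 k j) >> (A ** id2 (hcomp1 k j)) >>
     (assoc_inv Y k j >> (Bc ** id2 j) >> Cc))
  = assoc_inv X (hcomp1 l k) j >> ((assoc_inv X l k >> (A ** id2 k) >> Bc) ** id2 j) >> Cc.
Proof.
  rewrite <- (hcomp_id k j), !vcompA, <- (vcompA (A ** _)), assoc_inv_nat, !whisk_r, !vcompA.
  rewrite <- !(vcompA (id2 X ** assoc l k j)), <- (vcompA _ (assoc_inv _ _ _)).
  assert (P : (id2 X ** assoc l k j) >> assoc_inv X l (hcomp1 k j) >> assoc_inv (hcomp1 X l) k j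
     = assoc_inv X (hcomp1 l k) j >> (assoc_inv X l k ** id2 j)).
  { rewrite vcompA, pentagon_inv, <- !vcompA, <- whisk_l, assoc_inv_l, hcomp_id, vcomp1l.
    reflexivity. }
  rewrite P, !vcompA. reflexivity.
Qed.

Lemma absorb_assoc_inv {a0 a b c d} (X : hom B a0 a) (l : hom B a b) (k : hom B b c)
  (j : hom B c d) {Y : hom B a0 b} {Z : hom B a0 c} {W : hom B a0 d}
  (A : cell (hcomp1 X l) Y) (Bc : cell (hcomp1 Y k) Z) (Cc : cell (hcomp1 Z j) W) :
  (id2 X ** assoc_inv l k j) >>
     (assoc_inv X (hcomp1 l k) j >> ((assoc_inv X l k >> (A ** id2 k) >> Bc) ** id2 j) >> Cc)
  = assoc_inv X l (hcomp1 k j) >> (A ** id2 (hcomp1 k j)) >>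
     (assoc_inv Y k j >> (Bc ** id2 j) >> Cc).
Proof.
  rewrite <- absorb_assoc, <- vcompA, <- whisk_l, assoc_inv_r, hcomp_id, vcomp1l.
  reflexivity.
Qed.

Lemma absorb_lunit {a0 a b} (X : hom B a0 a) (l : hom B a b) {Y : hom B a0 b}
  (A : cell (hcomp1 X l) Y) :
  (id2 X ** lunit l) >> A = assoc_inv X (id1 a) l >> (runit X ** id2 l) >> A.
Proof.
  rewrite <- triangle, <- (vcompA (assoc_inv _ _ _)), assoc_inv_r, vcomp1l. reflexivity.
Qed.

Lemma absorb_lunit_inv {a0 a b} (X : hom B a0 a) (l : hom B a b) {Y : hom B a0 b}
  (A : cell (hcomp1 X l) Y) :
  (id2 X ** lunit_inv l) >> (assoc_inv X (id1 a) l >> (runit X ** id2 l) >> A) = A.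
Proof.
  rewrite <- absorb_lunit, <- vcompA, <- whisk_l, lunit_inv_r, hcomp_id, vcomp1l.
  reflexivity.
Qed.

Lemma absorb_runit {a0 a b} (X : hom B a0 a) (l : hom B a b) {Y : hom B a0 b}
  (A : cell (hcomp1 X l) Y) :
  (id2 X ** runit l) >> A = assoc_inv X l (id1 b) >> (A ** id2 (id1 b)) >> runit Y.
Proof.
  rewrite vcompA, runit_nat, <- kelly_runit, <- !vcompA, assoc_inv_r, vcomp1l. reflexivity.
Qed.

Lemma absorb_runit_inv {a0 a b} (X : hom B a0 a) (l : hom B a b) {Y : hom B a0 b}
  (A : cell (hcomp1 X l) Y) :
  (id2 X ** runit_inv l) >> (assoc_inv X l (id1 b) >> (A ** id2 (id1 b)) >> runit Y) = A.
Proof.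
  rewrite <- absorb_runit, <- vcompA, <- whisk_l, runit_inv_r, hcomp_id, vcomp1l.
  reflexivity.
Qed.

Lemma split_mono_comp {a0 a b c} (X : hom B a0 a) (l : hom B a b) (k : hom B b c)
  {Y : hom B a0 b} {Z : hom B a0 c}
  (A : cell (hcomp1 X l) Y) (Bc : cell (hcomp1 Y k) Z)
  (a' : cell Y (hcomp1 X l)) (b' : cell Z (hcomp1 Y k)) :
  A >> a' = id2 _ -> Bc >> b' = id2 _ ->
  assoc_inv X l k >> (A ** id2 k) >> Bc >> (b' >> (a' ** id2 k) >> assoc X l k) = id2 _.
Proof.
  intros H1 H2. rewrite !vcompA, <- (vcompA Bc), H2, vcomp1l.
  rewrite <- (vcompA (A ** _)), <- whisk_r, H1, hcomp_id, vcomp1l, assoc_inv_r. reflexivity.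
Qed.

Lemma runit_inv_whisk {a b} (X X' : hom B a b) (s : cell X X') {Y : hom B b b}
  (u : cell (id1 b) Y) {Y' : hom B b b} (v : cell Y Y') :
  runit_inv X >> ((id2 X ** u) >> (s ** v)) = s >> (runit_inv X' >> (id2 X' ** (u >> v))).
Proof.
  rewrite <- interchange2, vcomp1l, (split_lr s), <- vcompA, <- runit_inv_nat, !vcompA.
  reflexivity.
Qed.

End BicatAlgebra.

(** Inversion of equalities of dependent pairs, used to invert the
    inductive relations on normal forms below. *)
Ltac inv_ex := repeat match goal with
 | H : existT _ ?x _ = existT _ ?x _ |- _ => apply Eqdep.EqdepTheory.inj_pair2 in H; subst
 | H : existT _ ?x _ = existT _ ?y _ |- _ =>
     first [is_var x | is_var y];
     let E := fresh in assert (E := f_equal (@projT1 _ _) H); simpl in E; subst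
 | H : existT _ ?x _ = existT _ ?y _ |- _ =>
     let E := fresh in assert (E := f_equal (@projT1 _ _) H); simpl in E;
     injection E; clear E; intros
end.

(** ** Coherence for bicategories *)
Section FreeCoherence.
Variable C : Bicat.
Variable a0 : ob C.

Inductive Path : ob C -> Type :=
| pnil : Path a0
| psnoc : forall b c, Path b -> hom C b c -> Path c.
Arguments psnoc {b c} _ _.

Fixpoint path_hom {a} (S : Path a) : hom C a0 a :=
  match S in Path a return hom C a0 a with
  | pnil => id1 a0
  | psnoc p e => hcomp1 (path_hom p) e
  end.

Fixpoint extend {a b} (w : FWord (UG C) a b) : Path a -> Path b :=
  match w in FWord _ a b return Path a -> Path b with
  | fedge e => fun S => psnoc S e
  | funit _ => fun S => S
  | fcomp w v => fun S => extend v (extend w S)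
  end.

Fixpoint normalize {a b} (w : FWord (UG C) a b) : forall S : Path a,
  cell (hcomp1 (path_hom S) (evF1 w)) (path_hom (extend w S)) :=
  match w in FWord _ a b
    return forall S : Path a, cell (hcomp1 (path_hom S) (evF1 w)) (path_hom (extend w S)) with
  | fedge e => fun S => id2 _
  | funit _ => fun S => runit _
  | fcomp w v => fun S => assoc_inv _ _ _ >> (normalize w S ** id2 _) >> normalize v (extend w S)
  end.

(** [IdCell S S' t]: the paths [S] and [S'] coincide and [t] is the identity
    built edge by edge.  (Parallel words have propositionally but not
    definitionally equal extensions, so identities between them are
    described by this relation rather than by transport.) *)
Inductive IdCell : forall {a} (S S' : Path a), cell (path_hom S) (path_hom S') -> Prop :=
| idc_nil : IdCell pnil pnil (id2 _)
| idc_snoc : forall b c (p p' : Path b) (e : hom C b c) t,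
    IdCell p p' t -> IdCell (psnoc p e) (psnoc p' e) (t ** id2 e).

Lemma IdCell_refl : forall a (S : Path a), IdCell S S (id2 _).
Proof. induction S; [constructor|]. simpl. rewrite <- hcomp_id. constructor. auto. Qed.

Lemma IdCell_inv : forall a (S S' : Path a) t, IdCell S S' t ->
  match S as S0 in Path a1
    return (forall S'' : Path a1, cell (path_hom S0) (path_hom S'') -> Prop) with
  | pnil => fun S'' t =>
      existT (fun S2 => cell (path_hom pnil) (path_hom S2)) S'' t = existT _ pnil (id2 _)
  | psnoc p e => fun S'' t => exists p' t0, IdCell p p' t0 /\
      existT (fun S2 => cell (path_hom (psnoc p e)) (path_hom S2)) S'' t
      = existT _ (psnoc p' e) (t0 ** id2 e)
  end S' t.
Proof. induction 1; simpl; eauto. Qed.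

Lemma IdCell_comp : forall a (S1 S2 : Path a) t1, IdCell S1 S2 t1 ->
  forall S3 t2, IdCell S2 S3 t2 -> IdCell S1 S3 (t1 >> t2).
Proof.
  induction 1; intros S3 t2 H2; apply IdCell_inv in H2; simpl in H2.
  - inv_ex. rewrite vcomp1l. constructor.
  - destruct H2 as [p2 [t3 [H3 E]]]. inv_ex. cbn [path_hom].
    rewrite <- interchange2, vcomp1l. constructor. auto.
Qed.

Lemma IdCell_unique : forall a (S1 S2 : Path a) t1, IdCell S1 S2 t1 ->
  forall t2, IdCell S1 S2 t2 -> t1 = t2.
Proof.
  induction 1; intros t2 H2; apply IdCell_inv in H2; simpl in H2.
  - inv_ex. reflexivity.
  - destruct H2 as [p2 [t3 [H3 E]]]. inv_ex. f_equal. auto.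
Qed.

Lemma normalize_nat : forall a b (w : FWord (UG C) a b) (S S' : Path a) t, IdCell S S' t ->
  exists t', IdCell (extend w S) (extend w S') t' /\
    (t ** id2 (evF1 w)) >> normalize w S' = normalize w S >> t'.
Proof.
  induction w; intros S S' t H; simpl.
  - exists (t ** id2 e). split; [constructor; auto|]. rewrite vcomp1l, vcomp1r. reflexivity.
  - exists t. split; auto. apply runit_nat.
  - destruct (IHw1 _ _ _ H) as [t1 [H1 E1]].
    destruct (IHw2 _ _ _ H1) as [t2 [H2 E2]].
    exists t2. split; auto.
    rewrite <- hcomp_id, !vcompA, <- (vcompA (t ** _)), assoc_inv_nat, !vcompA.
    rewrite <- (vcompA ((t ** _) ** _)), <- whisk_r, E1, whisk_r, !vcompA, E2. reflexivity.
Qed.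

Lemma normalize_generator : forall a b (w w' : FWord (UG C) a b) (x : FCell w w') (S : Path a),
  exists t, IdCell (extend w S) (extend w' S) t /\
    (id2 (path_hom S) ** evF2 x) >> normalize w' S = normalize w S >> t.
Proof.
  induction x; intros S; simpl;
    try (exists (id2 _); split; [apply IdCell_refl | rewrite vcomp1r]).
  - rewrite hcomp_id, vcomp1l. reflexivity.
  - destruct (IHx1 S) as [t1 [H1 E1]]. destruct (IHx2 S) as [t2 [H2 E2]].
    exists (t1 >> t2). split; [eapply IdCell_comp; eauto|].
    rewrite whisk_l, vcompA, E2, <- vcompA, E1, vcompA. reflexivity.
  - destruct (IHx1 S) as [t1 [H1 E1]]. destruct (IHx2 (extend w S)) as [t2 [H2 E2]].
    destruct (normalize_nat _ _ v' _ _ _ H1) as [t3 [H3 E3]].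
    exists (t2 >> t3). split; [eapply IdCell_comp; eauto|].
    rewrite !vcompA, <- (vcompA (id2 _ ** _)), assoc_inv_nat.
    rewrite (split_lr (id2 (path_hom S) ** evF2 x1)), !vcompA.
    rewrite <- (vcompA (id2 _ ** evF2 x2)), <- whisk_commute, !vcompA.
    rewrite <- (vcompA ((id2 _ ** evF2 x1) ** _)), <- whisk_r, E1, whisk_r, !vcompA.
    rewrite <- (vcompA (t1 ** _)), whisk_commute, !vcompA, E3.
    rewrite <- (vcompA (id2 _ ** evF2 x2)), E2, !vcompA. reflexivity.
  - apply absorb_assoc.
  - apply absorb_assoc_inv.
  - apply absorb_lunit.
  - apply absorb_lunit_inv.
  - apply absorb_runit.
  - apply absorb_runit_inv.
Qed.

Lemma normalize_split_mono : forall a b (w : FWord (UG C) a b) (S : Path a),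
  exists r, normalize w S >> r = id2 _.
Proof.
  induction w; intros S; simpl.
  - exists (id2 _). apply vcomp1l.
  - exists (runit_inv _). apply runit_inv_l.
  - destruct (IHw1 S) as [r1 H1]. destruct (IHw2 (extend w1 S)) as [r2 H2].
    eexists. apply split_mono_comp; eauto.
Qed.

End FreeCoherence.

Theorem free_coherence (C : Bicat) (a b : ob C) (w w' : FWord (UG C) a b) (x y : FCell w w') :
  evF2 x = evF2 y.
Proof.
  destruct (normalize_generator C a _ _ w w' x (pnil C a)) as [t1 [H1 E1]].
  destruct (normalize_generator C a _ _ w w' y (pnil C a)) as [t2 [H2 E2]].
  rewrite (IdCell_unique _ _ _ _ _ _ H1 _ H2), <- E2 in E1.
  destruct (normalize_split_mono C a _ _ w' (pnil C a)) as [r Hr].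
  apply whisk_l_id_faithful.
  transitivity ((id2 (path_hom C a (pnil C a)) ** evF2 x) >> normalize C a w' (pnil C a) >> r).
  - rewrite vcompA, Hr, vcomp1r. reflexivity.
  - rewrite E1, vcompA, Hr, vcomp1r. reflexivity.
Qed.

(** ** Monotone lists of group indices and supporting maps

    Below, a list [gs] assigns to each Φ-term of a 1-cell word the index of
    the group (Φ-term of the normal form) it is merged into.  It must be
    monotone; [sorted_from m gs] says that [gs] is monotone with all entries
    [>= m]. *)
Section MonotoneLists.

Fixpoint sorted_from (m : nat) (gs : list nat) : Prop :=
  match gs with nil => True | g :: gs => m <= g /\ sorted_from g gs end.

Fixpoint last_from (m : nat) (gs : list nat) : nat :=
  match gs with nil => m | g :: gs => last_from g gs end.

Lemma sorted_from_app : forall g1 m g2,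
  sorted_from m (g1 ++ g2) <-> sorted_from m g1 /\ sorted_from (last_from m g1) g2.
Proof. induction g1; simpl; intros; [tauto|]. rewrite IHg1. tauto. Qed.

Lemma last_from_app : forall g1 m g2, last_from m (g1 ++ g2) = last_from (last_from m g1) g2.
Proof. induction g1; simpl; auto. Qed.

Lemma sorted_from_weaken : forall gs m m', m' <= m -> sorted_from m gs -> sorted_from m' gs.
Proof. destruct gs; simpl; intros; auto. split; [lia | tauto]. Qed.

Lemma sorted_from_firstn : forall n gs m, sorted_from m gs -> sorted_from m (firstn n gs).
Proof. intros. rewrite <- (firstn_skipn n gs) in H. apply sorted_from_app in H. tauto. Qed.

Lemma sorted_from_skipn : forall n gs m, sorted_from m gs ->
  sorted_from (last_from m (firstn n gs)) (skipn n gs).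
Proof. intros. rewrite <- (firstn_skipn n gs) in H. apply sorted_from_app in H. tauto. Qed.

Lemma sorted_from_seq : forall n s m, m <= s -> sorted_from m (seq s n).
Proof. induction n; simpl; intros; [exact I|]. split; [lia | apply IHn; lia]. Qed.

Lemma sorted_from_nth : forall gs m, sorted_from m gs <->
  (forall i, i < length gs -> m <= nth i gs 0) /\
  (forall i j, i <= j -> j < length gs -> nth i gs 0 <= nth j gs 0).
Proof.
  induction gs; simpl; intros.
  - split; auto. intros. split; intros; lia.
  - rewrite IHgs. split.
    + intros [H1 [H2 H3]]. split.
      * intros [|i] Hi; [auto|]. specialize (H2 i). lia.
      * intros [|i] [|j] Hij Hj; try lia; [apply H2; lia | apply H3; lia].
    + intros [H1 H2]. split; [apply (H1 0); lia|]. split.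
      * intros i Hi. apply (H2 0 (S i)); lia.
      * intros i j Hij Hj. apply (H2 (S i) (S j)); lia.
Qed.

Lemma nth_map_seq : forall (f : nat -> nat) n s k, k < n -> nth k (map f (seq s n)) 0 = f (s + k).
Proof.
  induction n; intros s k Hk; [lia|]. destruct k; simpl; [f_equal; lia|].
  rewrite IHn by lia. f_equal. lia.
Qed.

Lemma map_seq_shift : forall (f : nat -> nat) n s,
  map f (seq s n) = map (fun i => f (s + i)) (seq 0 n).
Proof.
  intros f n. revert f. induction n; intros f s; [reflexivity|]. simpl.
  rewrite Nat.add_0_r. f_equal.
  rewrite IHn, (IHn (fun i => f (s + i)) 1). apply map_ext. intros. f_equal. lia.
Qed.

Lemma map_nth_seq_id : forall gs n, length gs = n -> map (fun i => nth i gs 0) (seq 0 n) = gs.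
Proof.
  induction gs; intros n H; subst; simpl; [reflexivity|]. f_equal.
  rewrite map_seq_shift. simpl. apply IHgs. reflexivity.
Qed.

Lemma firstn_app_l : forall (l1 l2 : list nat) n, n = length l1 -> firstn n (l1 ++ l2) = l1.
Proof. induction l1; intros; subst; simpl; auto. f_equal. auto. Qed.

Lemma skipn_app_l : forall (l1 l2 : list nat) n, n = length l1 -> skipn n (l1 ++ l2) = l2.
Proof. induction l1; intros; subst; simpl; auto. Qed.

Lemma seq_split : forall s a b,
  firstn a (seq s (a + b)) = seq s a /\ skipn a (seq s (a + b)) = seq (s + a) b.
Proof.
  intros. rewrite seq_app. split.
  - apply firstn_app_l. rewrite length_seq. reflexivity.
  - apply skipn_app_l. rewrite length_seq. reflexivity.
Qed.

Lemma firstn_skipn_assoc (gs : list nat) m n :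
  firstn m (firstn (m + n) gs) = firstn m gs /\
  skipn m (firstn (m + n) gs) = firstn n (skipn m gs) /\
  skipn (m + n) gs = skipn n (skipn m gs).
Proof.
  rewrite firstn_firstn, Nat.min_l by lia. rewrite firstn_skipn_comm, skipn_skipn.
  rewrite (Nat.add_comm n). auto.
Qed.

Lemma supp_bound : forall G a b (l l' : LWord G a b) (phi : LCell l l') i,
  i < nphi l -> supp phi i < nphi l'.
Proof.
  induction phi; intros i Hi; simpl in *; try lia; auto.
  destruct (Nat.ltb_spec i (nphi l)).
  - specialize (IHphi1 i H). lia.
  - specialize (IHphi2 (i - nphi l)). lia.
Qed.

Lemma supp_mono : forall G a b (l l' : LWord G a b) (phi : LCell l l') i0 j0,
  i0 <= j0 -> j0 < nphi l -> supp phi i0 <= supp phi j0.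
Proof.
  induction phi; intros i0 j0 Hij Hj; simpl in *; try lia; auto.
  - apply IHphi2; [apply IHphi1; lia | apply supp_bound; lia].
  - destruct (Nat.ltb_spec i0 (nphi l)), (Nat.ltb_spec j0 (nphi l)); try lia.
    + apply IHphi1; lia.
    + pose proof (supp_bound _ _ _ _ _ phi1 i0 H). lia.
    + assert (supp phi2 (i0 - nphi l) <= supp phi2 (j0 - nphi l)) by (apply IHphi2; lia).
      lia.
Qed.

Definition pullback {G a b} {l l' : LWord G a b} (phi : LCell l l') (gs : list nat) : list nat :=
  map (fun i => nth (supp phi i) gs 0) (seq 0 (nphi l)).

Lemma pullback_length : forall G a b (l l' : LWord G a b) (phi : LCell l l') gs,
  length (pullback phi gs) = nphi l.
Proof. intros. unfold pullback. rewrite length_map, length_seq. reflexivity. Qed.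

Lemma pullback_sorted : forall G a b (l l' : LWord G a b) (phi : LCell l l') gs m,
  length gs = nphi l' -> sorted_from m gs -> sorted_from m (pullback phi gs).
Proof.
  intros G a b l l' phi gs m Hl Hs. apply sorted_from_nth in Hs. destruct Hs as [H1 H2].
  apply sorted_from_nth. rewrite pullback_length. unfold pullback. split.
  - intros i Hi. rewrite nth_map_seq by auto. apply H1.
    rewrite Hl. apply supp_bound. lia.
  - intros i j Hij Hj. rewrite !nth_map_seq by lia. apply H2.
    + apply supp_mono; lia.
    + rewrite Hl. apply supp_bound. lia.
Qed.

Lemma pullback_structural : forall G a b (l l' : LWord G a b) (phi : LCell l l') gs,
  (forall i, supp phi i = i) -> length gs = nphi l -> pullback phi gs = gs.
Proof.
  intros. unfold pullback. transitivity (map (fun i => nth i gs 0) (seq 0 (nphi l))).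
  - apply map_ext. intro i. rewrite H. reflexivity.
  - apply map_nth_seq_id. auto.
Qed.

Lemma pullback_vcomp : forall G a b (l l' l'' : LWord G a b) (x : LCell l l') (y : LCell l' l'') gs,
  pullback (lc_v _ _ _ _ _ _ x y) gs = pullback x (pullback y gs).
Proof.
  intros. unfold pullback at 1 2. apply map_ext_in. intros i Hi. apply in_seq in Hi.
  simpl. unfold pullback. rewrite nth_map_seq; [reflexivity|]. apply supp_bound. lia.
Qed.

Lemma pullback_hcomp_firstn : forall G a b c (l l' : LWord G a b) (k k' : LWord G b c)
  (x : LCell l l') (y : LCell k k') gs,
  firstn (nphi l) (pullback (lc_h _ _ _ _ _ _ _ _ x y) gs) = pullback x (firstn (nphi l') gs).
Proof.
  intros. unfold pullback. simpl nphi. rewrite seq_app, map_app.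
  rewrite firstn_app_l by (rewrite length_map, length_seq; reflexivity).
  apply map_ext_in. intros i Hi. apply in_seq in Hi. simpl.
  destruct (Nat.ltb_spec i (nphi l)); try lia.
  rewrite nth_firstn. pose proof (supp_bound _ _ _ _ _ x i ltac:(lia)).
  destruct (Nat.ltb_spec (supp x i) (nphi l')); [reflexivity | lia].
Qed.

Lemma pullback_hcomp_skipn : forall G a b c (l l' : LWord G a b) (k k' : LWord G b c)
  (x : LCell l l') (y : LCell k k') gs,
  skipn (nphi l) (pullback (lc_h _ _ _ _ _ _ _ _ x y) gs) = pullback y (skipn (nphi l') gs).
Proof.
  intros. unfold pullback. simpl nphi. rewrite seq_app, map_app.
  rewrite skipn_app_l by (rewrite length_map, length_seq; reflexivity).
  rewrite map_seq_shift. simpl. apply map_ext_in. intros i Hi. apply in_seq in Hi.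
  destruct (Nat.ltb_spec (nphi l + i) (nphi l)); try lia.
  rewrite nth_skipn. do 3 f_equal. lia.
Qed.

End MonotoneLists.

Section LaxFunctorAlgebra.
Context {C D : Bicat} (F : LaxFunctor C D).

(** The unit axioms of [F], solved for the image of an inverse unitor. *)
Lemma lax_lunit_inv {b d} (w : hom C b d) :
  lunit_inv (F1 F w) >> ((lax_i F b ** id2 (F1 F w)) >> lax_m F (id1 b) w) = F2 F (lunit_inv w).
Proof.
  assert (E : F2 F (lunit w) >> F2 F (lunit_inv w) = id2 _)
    by (rewrite <- F2_comp, lunit_inv_l, F2_id; reflexivity).
  rewrite <- (vcomp1r (lunit_inv (F1 F w) >> _)), <- E, !vcompA.
  rewrite <- (vcompA (_ ** _) (lax_m F _ _)), <- (vcompA ((_ ** _) >> _)), lax_lunit.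
  rewrite <- vcompA, lunit_inv_r, vcomp1l. reflexivity.
Qed.

Lemma lax_runit_inv {b d} (w : hom C b d) :
  (id2 (F1 F w) ** lax_i F d) >> lax_m F w (id1 d) = runit (F1 F w) >> F2 F (runit_inv w).
Proof.
  assert (E : F2 F (runit w) >> F2 F (runit_inv w) = id2 _)
    by (rewrite <- F2_comp, runit_inv_l, F2_id; reflexivity).
  rewrite <- (vcomp1r (_ >> lax_m F _ _)), <- E, <- !vcompA, lax_runit. reflexivity.
Qed.

Lemma lax_m_nat_l {b c d} {f f' : hom C b c} (x : cell f f') (g : hom C c d) :
  (F2 F x ** id2 (F1 F g)) >> lax_m F f' g = lax_m F f g >> F2 F (x ** id2 g).
Proof. rewrite <- (F2_id F g), lax_m_nat. reflexivity. Qed.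

Lemma lax_m_nat_r {b c d} (f : hom C b c) {g g' : hom C c d} (y : cell g g') :
  (id2 (F1 F f) ** F2 F y) >> lax_m F f g' = lax_m F f g >> F2 F (id2 f ** y).
Proof. rewrite <- (F2_id F f), lax_m_nat. reflexivity. Qed.

End LaxFunctorAlgebra.

(** ** Normal forms for the lax case

    A [Stack] is a
    snoc-list of words of F(U C) (the "groups"); it denotes
    [((1 ⊙ F w_1) ⊙ F w_2) ⊙ ... ⊙ F w_n] in D.  Groups are numbered from 0.
    [push S w g] absorbs a new Φ-term [F w] destined for group [g]: if [g]
    is the last group it is merged into it with [m]; otherwise unit groups
    [F(I)] (created with [i]) are inserted up to position [g] and [w] starts
    a new group.  [absorb l S gs] absorbs all Φ-terms of a 1-cell word [l]
    with group indices [gs], and [canon l S gs] is the corresponding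
    normalizing 2-cell. *)
Section LaxNormalForm.
Context {C D : Bicat} (F : LaxFunctor C D) (a0 : ob C).

Local Notation FF w := (F1 F (evF1 w)).
Local Notation FX x := (F2 F (evF2 x)).

Inductive Stack : ob C -> Type :=
| snil : Stack a0
| ssnoc : forall b c, Stack b -> FWord (UG C) b c -> Stack c.
Arguments ssnoc {b c} _ _.

Fixpoint stack_hom {a} (S : Stack a) : hom D (F0 F a0) (F0 F a) :=
  match S in Stack a return hom D (F0 F a0) (F0 F a) with
  | snil => id1 _
  | ssnoc p c => hcomp1 (stack_hom p) (FF c)
  end.

Fixpoint depth {a} (S : Stack a) : nat :=
  match S with snil => 0 | ssnoc p _ => Datatypes.S (depth p) end.

Fixpoint pad (n : nat) {a} (S : Stack a) : Stack a :=
  match n with 0 => S | Datatypes.S n => ssnoc (pad n S) (funit (G:=UG C) a) end.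

Fixpoint pad_cell (n : nat) {a} (S : Stack a) : cell (stack_hom S) (stack_hom (pad n S)) :=
  match n return cell (stack_hom S) (stack_hom (pad n S)) with
  | 0 => id2 _
  | Datatypes.S n => pad_cell n S >> runit_inv _ >> (id2 _ ** lax_i F a)
  end.

Definition merge_cell {x b c d} (X : hom D x (F0 F b)) (c0 : FWord (UG C) b c)
  (w : FWord (UG C) c d) : cell (hcomp1 (hcomp1 X (FF c0)) (FF w)) (hcomp1 X (FF (fcomp c0 w))) :=
  assoc X (FF c0) (FF w) >> (id2 X ** lax_m F (evF1 c0) (evF1 w)).

Definition push {b c} (S : Stack b) (w : FWord (UG C) b c) (g : nat) : Stack c :=
  match S in Stack b return FWord (UG C) b c -> Stack c with
  | snil => fun w => ssnoc (pad g snil) w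
  | ssnoc p c0 => fun w => if g <? Datatypes.S (depth p) then ssnoc p (fcomp c0 w)
                          else ssnoc (pad (g - Datatypes.S (depth p)) (ssnoc p c0)) w
  end w.

Definition push_cell {b c} (S : Stack b) (w : FWord (UG C) b c) (g : nat) :
  cell (hcomp1 (stack_hom S) (FF w)) (stack_hom (push S w g)) :=
  match S as S0 in Stack b
    return forall w : FWord (UG C) b c,
      cell (hcomp1 (stack_hom S0) (FF w)) (stack_hom (push S0 w g))
  with
  | snil => fun w => pad_cell g snil ** id2 _
  | ssnoc p c0 => fun w =>
      match (g <? Datatypes.S (depth p)) as bb return
        cell (hcomp1 (stack_hom (ssnoc p c0)) (FF w))
          (stack_hom (if bb then ssnoc p (fcomp c0 w)
                      else ssnoc (pad (g - Datatypes.S (depth p)) (ssnoc p c0)) w)) with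
      | true => merge_cell _ _ _
      | false => pad_cell _ _ ** id2 _
      end
  end w.

Fixpoint absorb {a b} (l : LWord (UG C) a b) : Stack a -> list nat -> Stack b :=
  match l in LWord _ a b return Stack a -> list nat -> Stack b with
  | lphi w => fun S gs => push S w (hd 0 gs)
  | lunitw _ => fun S gs => S
  | lcomp l k => fun S gs => absorb k (absorb l S (firstn (nphi l) gs)) (skipn (nphi l) gs)
  end.

Fixpoint canon {a b} (l : LWord (UG C) a b) : forall (S : Stack a) gs,
  cell (hcomp1 (stack_hom S) (evL1 F l)) (stack_hom (absorb l S gs)) :=
  match l in LWord _ a b
    return forall (S : Stack a) gs,
      cell (hcomp1 (stack_hom S) (evL1 F l)) (stack_hom (absorb l S gs))
  with
  | lphi w => fun S gs => push_cell S w (hd 0 gs)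
  | lunitw _ => fun S gs => runit _
  | lcomp l k => fun S gs =>
      assoc_inv _ _ _ >> (canon l S (firstn (nphi l) gs) ** id2 _)
      >> canon k (absorb l S (firstn (nphi l) gs)) (skipn (nphi l) gs)
  end.

Lemma push_merge {b c d} (p : Stack b) (c0 : FWord (UG C) b c) (w : FWord (UG C) c d) g :
  g < Datatypes.S (depth p) ->
  existT (fun T => cell (hcomp1 (stack_hom (ssnoc p c0)) (FF w)) (stack_hom T))
    (push (ssnoc p c0) w g) (push_cell (ssnoc p c0) w g)
  = existT _ (ssnoc p (fcomp c0 w)) (merge_cell _ _ _).
Proof. intro H. unfold push, push_cell. apply Nat.ltb_lt in H. rewrite H. reflexivity. Qed.

Lemma push_new {b c} (S : Stack b) (w : FWord (UG C) b c) g :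
  depth S <= g ->
  existT (fun T => cell (hcomp1 (stack_hom S) (FF w)) (stack_hom T)) (push S w g) (push_cell S w g)
  = existT _ (ssnoc (pad (g - depth S) S) w) (pad_cell (g - depth S) S ** id2 _).
Proof.
  intro H. destruct S.
  - simpl. rewrite Nat.sub_0_r. reflexivity.
  - unfold push, push_cell.
    assert (H' : (g <? Datatypes.S (depth S)) = false) by (apply Nat.ltb_ge; simpl in H; lia).
    rewrite H'. reflexivity.
Qed.

(** Replace [push S w g] and [push_cell S w g] by their value given by the
    equation [H] (an instance of [push_merge] or [push_new]). *)
Ltac rewrite_push S w g H :=
  revert H; generalize (push_cell S w g); generalize (push S w g); intros ? ? H; inv_ex.

Lemma depth_pad : forall n a (S : Stack a), depth (pad n S) = n + depth S.
Proof. induction n; simpl; auto. Qed.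

Inductive GroupCell : forall {a} (S S' : Stack a), cell (stack_hom S) (stack_hom S') -> Prop :=
| gc_nil : GroupCell snil snil (id2 _)
| gc_snoc : forall b c (p p' : Stack b) (c0 c1 : FWord (UG C) b c) t (x : FCell c0 c1),
    GroupCell p p' t -> GroupCell (ssnoc p c0) (ssnoc p' c1) (t ** FX x).

Inductive StructCell : forall {a} (S S' : Stack a), cell (stack_hom S) (stack_hom S') -> Prop :=
| sc_group : forall a (S S' : Stack a) t, GroupCell S S' t -> StructCell S S' t
| sc_unit : forall b (S p' : Stack b) (c : FWord (UG C) b b) t (x : FCell (funit (G:=UG C) b) c),
    StructCell S p' t ->
    StructCell S (ssnoc p' c) (t >> runit_inv _ >> (id2 _ ** (lax_i F b >> FX x))).

Lemma GroupCell_inv : forall a (S S' : Stack a) t, GroupCell S S' t ->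
  match S as S0 in Stack a1
    return (forall S'' : Stack a1, cell (stack_hom S0) (stack_hom S'') -> Prop) with
  | snil => fun S'' t =>
      existT (fun S2 => cell (stack_hom snil) (stack_hom S2)) S'' t = existT _ snil (id2 _)
  | ssnoc p c0 => fun S'' t => exists p' c1 t0 (x : FCell c0 c1), GroupCell p p' t0 /\
      existT (fun S2 => cell (stack_hom (ssnoc p c0)) (stack_hom S2)) S'' t
      = existT _ (ssnoc p' c1) (t0 ** FX x)
  end S' t.
Proof. induction 1; simpl; eauto 7. Qed.

Lemma StructCell_inv : forall a (S S' : Stack a) t, StructCell S S' t ->
  GroupCell S S' t \/
  exists p' (c : FWord (UG C) a a) (x : FCell (funit (G:=UG C) a) c) t0, StructCell S p' t0 /\
   existT (fun S2 => cell (stack_hom S) (stack_hom S2)) S' t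
   = existT _ (ssnoc p' c) (t0 >> runit_inv _ >> (id2 _ ** (lax_i F a >> FX x))).
Proof. destruct 1; eauto 8. Qed.

Lemma GroupCell_depth : forall a (S S' : Stack a) t, GroupCell S S' t -> depth S = depth S'.
Proof. induction 1; simpl; auto. Qed.

Lemma StructCell_depth : forall a (S S' : Stack a) t, StructCell S S' t -> depth S <= depth S'.
Proof. induction 1; simpl; [apply GroupCell_depth in H|]; lia. Qed.

Lemma FX_coherent {a b} (w w' : FWord (UG C) a b) (x y : FCell w w') : FX x = FX y.
Proof. rewrite (free_coherence C a b w w' x y). reflexivity. Qed.

(** Structural cells between two given stacks are unique: the number of
    inserted unit groups is determined by the depths, and the group cells are
    determined by coherence. *)
Lemma GroupCell_unique : forall a (S1 S2 : Stack a) t1, GroupCell S1 S2 t1 ->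
  forall t2, GroupCell S1 S2 t2 -> t1 = t2.
Proof.
  induction 1; intros t2 H2; apply GroupCell_inv in H2; simpl in H2.
  - inv_ex. reflexivity.
  - destruct H2 as [p2 [c2 [t3 [x3 [H3 E]]]]]. inv_ex. f_equal; [auto | apply FX_coherent].
Qed.

Lemma StructCell_unique : forall a (S1 S2 : Stack a) t1, StructCell S1 S2 t1 ->
  forall t2, StructCell S1 S2 t2 -> t1 = t2.
Proof.
  induction 1; intros t2 H2; apply StructCell_inv in H2;
    destruct H2 as [H2 | [p2 [c2 [x2 [t3 [H3 E]]]]]].
  - eapply GroupCell_unique; eauto.
  - inv_ex. apply GroupCell_depth in H. apply StructCell_depth in H3. simpl in H. lia.
  - apply GroupCell_depth in H2. apply StructCell_depth in H. simpl in H2. lia.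
  - inv_ex. rewrite (IHStructCell _ H3), (FX_coherent _ _ x x2). reflexivity.
Qed.

Lemma FX_id {a b} (w : FWord (UG C) a b) : FX (fc_id _ _ _ w) = id2 _.
Proof. simpl. apply F2_id. Qed.

Lemma FX_vcomp {a b} {w w' w'' : FWord (UG C) a b} (x : FCell w w') (y : FCell w' w'') :
  FX (fc_v _ _ _ _ _ _ x y) = FX x >> FX y.
Proof. simpl. apply F2_comp. Qed.

Lemma GroupCell_refl : forall a (S : Stack a), GroupCell S S (id2 _).
Proof.
  induction S; [constructor|].
  replace (id2 (stack_hom (ssnoc S f))) with (id2 (stack_hom S) ** FX (fc_id _ _ _ f)).
  - constructor; auto.
  - rewrite FX_id. apply hcomp_id.
Qed.

Lemma StructCell_refl : forall a (S : Stack a), StructCell S S (id2 _).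
Proof. intros. constructor. apply GroupCell_refl. Qed.

Lemma GroupCell_comp : forall a (S1 S2 : Stack a) t1, GroupCell S1 S2 t1 ->
  forall S3 t2, GroupCell S2 S3 t2 -> GroupCell S1 S3 (t1 >> t2).
Proof.
  induction 1; intros S3 t2 H2; apply GroupCell_inv in H2; simpl in H2.
  - inv_ex. rewrite vcomp1l. constructor.
  - destruct H2 as [p2 [c2 [t3 [x3 [H3 E]]]]]. inv_ex. cbn [stack_hom].
    rewrite <- interchange2, <- FX_vcomp. constructor. auto.
Qed.

Lemma StructCell_comp_group : forall a (A B : Stack a) t1, StructCell A B t1 ->
  forall C' t2, GroupCell B C' t2 -> StructCell A C' (t1 >> t2).
Proof.
  induction 1; intros C' t2 H2.
  - constructor. eapply GroupCell_comp; eauto.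
  - apply GroupCell_inv in H2. simpl in H2.
    destruct H2 as [p2 [c2 [t3 [x3 [H3 E]]]]]. inv_ex. cbn [stack_hom].
    pose proof (sc_unit _ _ _ _ _ (fc_v _ _ _ _ _ _ x x3) (IHStructCell _ _ H3)) as K.
    rewrite FX_vcomp, !vcompA in K. rewrite !vcompA, runit_inv_whisk, !vcompA. exact K.
Qed.

Lemma StructCell_comp : forall a (B C' : Stack a) t2, StructCell B C' t2 ->
  forall A t1, StructCell A B t1 -> StructCell A C' (t1 >> t2).
Proof.
  induction 1; intros A0 t1 H1.
  - eapply StructCell_comp_group; eauto.
  - rewrite <- !vcompA. apply sc_unit. auto.
Qed.

Lemma StructCell_pad : forall n a (S : Stack a), StructCell S (pad n S) (pad_cell n S).
Proof.
  induction n; intros; simpl; [apply StructCell_refl|].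
  replace (lax_i F a) with (lax_i F a >> FX (fc_id _ _ _ (funit (G:=UG C) a)))
    by (rewrite FX_id, vcomp1r; reflexivity).
  apply sc_unit. auto.
Qed.

Lemma StructCell_saturate : forall a (S S' : Stack a) t, StructCell S S' t ->
  forall n, depth (pad n S) = depth S' ->
  exists s, GroupCell (pad n S) S' s /\ pad_cell n S >> s = t.
Proof.
  induction 1; intros n Hn.
  - destruct n.
    + exists t. split; auto. apply vcomp1l.
    + apply GroupCell_depth in H. rewrite depth_pad in Hn. lia.
  - destruct n.
    + apply StructCell_depth in H. simpl in Hn. lia.
    + simpl in Hn. injection Hn; intro Hn'.
      destruct (IHStructCell n Hn') as [s [Hs Es]].
      exists (s ** FX x). split; [simpl; constructor; auto|].
      simpl. rewrite !vcompA, runit_inv_whisk, <- (vcompA (pad_cell n S)), Es. reflexivity.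
Qed.

(** The equations in D behind the naturality of [push] with respect to the
    generators [i], [m], [Φ] and to structural cells. *)

(** Merging into a freshly created unit group amounts to a left unitor. *)
Lemma merge_into_unit_group {x b d} (X : hom D x (F0 F b)) (c : FWord (UG C) b b)
  (xx : FCell (funit (G:=UG C) b) c) (w : FWord (UG C) b d) :
  ((runit_inv X >> (id2 X ** (lax_i F b >> FX xx))) ** id2 (FF w)) >> merge_cell X c w
  = id2 X ** FX (fc_v _ _ _ _ _ _ (fc_lunit_inv _ _ _ w) (fc_h _ _ _ _ _ _ _ _ xx (fc_id _ _ _ w))).
Proof.
  unfold merge_cell. simpl. rewrite F2_comp, whisk_r, !vcompA.
  rewrite <- (vcompA ((id2 X ** _) ** _)), assoc_nat, !vcompA.
  rewrite <- (vcompA (runit_inv X ** _)), triangle_inv, <- !whisk_l. f_equal.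
  rewrite whisk_r, !vcompA, lax_m_nat_l, <- !vcompA. simpl.
  rewrite (vcompA (lunit_inv _)), lax_lunit_inv. reflexivity.
Qed.

Lemma unit_merge {x b' b} (X : hom D x (F0 F b')) (c0 : FWord (UG C) b' b) :
  (id2 (hcomp1 X (FF c0)) ** lax_i F b) >> merge_cell X c0 (funit (G:=UG C) b)
  = runit (hcomp1 X (FF c0)) >> (id2 X ** FX (fc_runit_inv _ _ _ c0)).
Proof.
  unfold merge_cell. simpl. rewrite <- hcomp_id, <- vcompA, assoc_nat, vcompA, <- whisk_l.
  rewrite lax_runit_inv, whisk_l, <- vcompA, kelly_runit. reflexivity.
Qed.

Lemma unit_new {x b} {Y Y' : hom D x (F0 F b)} (P : cell Y Y') :
  (id2 Y ** lax_i F b) >> (P ** id2 (F1 F (id1 b)))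
  = runit Y >> (P >> runit_inv Y' >>
      (id2 Y' ** (lax_i F b >> FX (fc_id _ _ _ (funit (G:=UG C) b))))).
Proof.
  rewrite FX_id, vcomp1r, <- whisk_commute.
  assert (E : P ** id2 (id1 (F0 F b)) = runit Y >> P >> runit_inv Y').
  { rewrite vcompA, runit_inv_nat, <- vcompA, runit_inv_l, vcomp1l. reflexivity. }
  rewrite E, !vcompA. reflexivity.
Qed.

(** Merging a product [m] into a group: the lax associativity axiom. *)
Lemma mult_merge {x b' b c d} (X : hom D x (F0 F b')) (c0 : FWord (UG C) b' b)
  (w : FWord (UG C) b c) (v : FWord (UG C) c d) :
  (id2 (hcomp1 X (FF c0)) ** lax_m F (evF1 w) (evF1 v)) >> merge_cell X c0 (fcomp w v)
  = assoc_inv (hcomp1 X (FF c0)) (FF w) (FF v) >> (merge_cell X c0 w ** id2 (FF v)) >>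
      merge_cell X (fcomp c0 w) v >> (id2 X ** FX (fc_assoc _ _ _ _ _ c0 w v)).
Proof.
  unfold merge_cell. cbn [evF1].
  change (F2 F (evF2 (fc_assoc _ _ _ _ _ c0 w v)))
    with (F2 F (assoc (evF1 c0) (evF1 w) (evF1 v))).
  rewrite whisk_r, !vcompA, <- (vcompA ((id2 X ** _) ** _)), assoc_nat, !vcompA, <- !whisk_l.
  rewrite <- (vcompA (lax_m F _ _ ** _)), lax_assoc, !whisk_l, !vcompA.
  rewrite <- (vcompA (assoc X _ _ ** id2 _) (assoc X _ _)).
  rewrite <- (vcompA ((assoc X _ _ ** id2 _) >> assoc X _ _) (id2 X ** assoc _ _ _)).
  rewrite pentagon, !vcompA.
  rewrite <- (vcompA (assoc X _ _) (id2 X ** (id2 _ ** _))), <- assoc_nat, hcomp_id.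
  rewrite <- !vcompA, assoc_inv_r, vcomp1l, !vcompA. reflexivity.
Qed.

Lemma mult_new {x b c d} {Y Y' : hom D x (F0 F b)} (P : cell Y Y')
  (w : FWord (UG C) b c) (v : FWord (UG C) c d) :
  (id2 Y ** lax_m F (evF1 w) (evF1 v)) >> (P ** id2 (FF (fcomp w v)))
  = assoc_inv Y (FF w) (FF v) >> ((P ** id2 (FF w)) ** id2 (FF v)) >> merge_cell Y' w v >> id2 _.
Proof.
  unfold merge_cell.
  rewrite vcomp1r, !vcompA, <- (vcompA ((P ** _) ** _)), assoc_nat, hcomp_id, <- !vcompA.
  rewrite assoc_inv_r, vcomp1l, whisk_commute. reflexivity.
Qed.

Lemma phi_merge {x b' b c} (X : hom D x (F0 F b')) (c0 : FWord (UG C) b' b)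
  {w w' : FWord (UG C) b c} (xx : FCell w w') :
  (id2 (hcomp1 X (FF c0)) ** FX xx) >> merge_cell X c0 w'
  = merge_cell X c0 w >> (id2 X ** FX (fc_h _ _ _ _ _ _ _ _ (fc_id _ _ _ c0) xx)).
Proof.
  unfold merge_cell. simpl. rewrite <- hcomp_id, <- vcompA, assoc_nat, vcompA, <- !whisk_l.
  rewrite lax_m_nat_r, whisk_l, vcompA. reflexivity.
Qed.

Lemma group_cell_merge {x b' b c} {X X' : hom D x (F0 F b')} (s : cell X X')
  {c0 c1 : FWord (UG C) b' b} (xx : FCell c0 c1) (w : FWord (UG C) b c) :
  ((s ** FX xx) ** id2 (FF w)) >> merge_cell X' c1 w
  = merge_cell X c0 w >> (s ** FX (fc_h _ _ _ _ _ _ _ _ xx (fc_id _ _ _ w))).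
Proof.
  unfold merge_cell. simpl. rewrite <- vcompA, assoc_nat, !vcompA, <- interchange2, vcomp1r.
  rewrite lax_m_nat_l, <- interchange2, vcomp1l. reflexivity.
Qed.

Lemma unit_group_merge {x b d} {Y Y0 X : hom D x (F0 F b)} (tau : cell Y X) (P0 : cell Y Y0)
  (s : cell Y0 X) (c : FWord (UG C) b b) (xx : FCell (funit (G:=UG C) b) c)
  (w : FWord (UG C) b d) :
  P0 >> s = tau ->
  ((tau >> runit_inv X >> (id2 X ** (lax_i F b >> FX xx))) ** id2 (FF w)) >> merge_cell X c w
  = (P0 ** id2 (FF w)) >>
    (s ** FX (fc_v _ _ _ _ _ _ (fc_lunit_inv _ _ _ w) (fc_h _ _ _ _ _ _ _ _ xx (fc_id _ _ _ w)))).
Proof.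
  intro E. rewrite vcompA, whisk_r, vcompA, merge_into_unit_group, (split_lr s), <- vcompA.
  rewrite <- whisk_r, E. reflexivity.
Qed.

Lemma push_nat_new {b c} (S1 S1' : Stack b) t (w : FWord (UG C) b c) g :
  StructCell S1 S1' t -> depth S1' <= g ->
  exists t', StructCell (push S1 w g) (push S1' w g) t' /\
    (t ** id2 (FF w)) >> push_cell S1' w g = push_cell S1 w g >> t'.
Proof.
  intros Ht H.
  assert (H2 : depth S1 <= g) by (apply StructCell_depth in Ht; lia).
  pose proof (push_new S1' w g H) as E1. pose proof (push_new S1 w g H2) as E2.
  rewrite_push S1' w g E1. rewrite_push S1 w g E2.
  assert (K := StructCell_comp _ _ _ _ (StructCell_pad (g - depth S1') _ S1') _ _ Ht).
  destruct (StructCell_saturate _ _ _ _ K (g - depth S1)) as [s [Hs Es]].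
  { rewrite !depth_pad. apply StructCell_depth in Ht. lia. }
  exists (s ** FX (fc_id _ _ _ w)). split; [apply sc_group, gc_snoc; auto|].
  cbn [stack_hom]. rewrite FX_id, <- !whisk_r, Es. reflexivity.
Qed.

Lemma push_nat_group_merge {b c d} (p p' : Stack b) (c0 c1 : FWord (UG C) b c) s
  (x : FCell c0 c1) (w : FWord (UG C) c d) g :
  GroupCell p p' s -> g < Datatypes.S (depth p') ->
  exists t', StructCell (push (ssnoc p c0) w g) (push (ssnoc p' c1) w g) t' /\
    ((s ** FX x) ** id2 (FF w)) >> push_cell (ssnoc p' c1) w g = push_cell (ssnoc p c0) w g >> t'.
Proof.
  intros Hs H. assert (HL := GroupCell_depth _ _ _ _ Hs).
  pose proof (push_merge p' c1 w g H) as E1.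
  pose proof (push_merge p c0 w g ltac:(lia)) as E2.
  rewrite_push (ssnoc p' c1) w g E1. rewrite_push (ssnoc p c0) w g E2.
  exists (s ** FX (fc_h _ _ _ _ _ _ _ _ x (fc_id _ _ _ w))).
  split; [apply sc_group, gc_snoc; auto | apply group_cell_merge].
Qed.

Lemma push_nat_unit_merge {b d} (S1 p' : Stack b) (c : FWord (UG C) b b) t0
  (x : FCell (funit (G:=UG C) b) c) (w : FWord (UG C) b d) g :
  StructCell S1 p' t0 -> g = depth p' ->
  exists t', StructCell (push S1 w g) (push (ssnoc p' c) w g) t' /\
    ((t0 >> runit_inv _ >> (id2 _ ** (lax_i F b >> FX x))) ** id2 (FF w))
      >> push_cell (ssnoc p' c) w g
    = push_cell S1 w g >> t'.
Proof.
  intros Ht ->. assert (HL := StructCell_depth _ _ _ _ Ht).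
  pose proof (push_merge p' c w (depth p') ltac:(lia)) as E1.
  pose proof (push_new S1 w (depth p') HL) as E2.
  rewrite_push (ssnoc p' c) w (depth p') E1. rewrite_push S1 w (depth p') E2.
  destruct (StructCell_saturate _ _ _ _ Ht (depth p' - depth S1)) as [s [Hs Es]].
  { rewrite depth_pad. lia. }
  exists (s ** FX (fc_v _ _ _ _ _ _ (fc_lunit_inv _ _ _ w)
                     (fc_h _ _ _ _ _ _ _ _ x (fc_id _ _ _ w)))).
  split; [apply sc_group, gc_snoc; auto | apply unit_group_merge; exact Es].
Qed.

Lemma push_struct_nat {b c} (S1 S1' : Stack b) t (w : FWord (UG C) b c) g :
  StructCell S1 S1' t -> depth S1' - 1 <= g ->
  exists t', StructCell (push S1 w g) (push S1' w g) t' /\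
    (t ** id2 (FF w)) >> push_cell S1' w g = push_cell S1 w g >> t'.
Proof.
  intros Ht Hg. destruct (le_lt_dec (depth S1') g) as [H | H]; [apply push_nat_new; auto|].
  apply StructCell_inv in Ht. destruct Ht as [Ht | [p' [c' [x [t0 [Ht E]]]]]].
  - destruct S1 as [|b' c' p c0]; apply GroupCell_inv in Ht; simpl in Ht.
    + inv_ex. simpl in H. lia.
    + destruct Ht as [p2 [c2 [t3 [x3 [H3 E]]]]]. inv_ex.
      apply push_nat_group_merge; auto.
  - inv_ex. simpl in H, Hg. apply push_nat_unit_merge; auto. lia.
Qed.

Lemma depth_absorb : forall a b (l : LWord (UG C) a b) (S : Stack a) gs,
  length gs = nphi l -> sorted_from (depth S - 1) gs ->
  depth (absorb l S gs) - 1 = last_from (depth S - 1) gs.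
Proof.
  induction l; intros S gs Hl Hs.
  - destruct gs as [|g [|g' gs]]; simpl in Hl; try lia. cbn [absorb hd last_from]. simpl in Hs.
    destruct (le_lt_dec (depth S) g) as [H|H].
    + pose proof (f_equal (@projT1 _ _) (push_new S f g H)) as E. cbn [projT1] in E.
      rewrite E. simpl. rewrite depth_pad. lia.
    + destruct S as [|b' c' p c0]; [simpl in H; lia|].
      pose proof (f_equal (@projT1 _ _) (push_merge p c0 f g H)) as E. cbn [projT1] in E.
      rewrite E. simpl in *. lia.
  - destruct gs; simpl in Hl; [reflexivity | lia].
  - simpl in Hl. cbn [absorb].
    assert (H1 := IHl1 S (firstn (nphi l1) gs) ltac:(rewrite length_firstn; lia)
                    (sorted_from_firstn _ _ _ Hs)).
    rewrite IHl2.
    + rewrite H1, <- last_from_app, firstn_skipn. reflexivity.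
    + rewrite length_skipn. lia.
    + rewrite H1. apply sorted_from_skipn. auto.
Qed.

Lemma canon_struct_nat : forall a b (k : LWord (UG C) a b) (S1 S1' : Stack a) t gs,
  StructCell S1 S1' t -> length gs = nphi k -> sorted_from (depth S1' - 1) gs ->
  exists t', StructCell (absorb k S1 gs) (absorb k S1' gs) t' /\
    (t ** id2 (evL1 F k)) >> canon k S1' gs = canon k S1 gs >> t'.
Proof.
  induction k; intros S1 S1' t gs Ht Hl Hs.
  - destruct gs as [|g [|g' gs]]; simpl in Hl; try lia. simpl in Hs.
    apply push_struct_nat; tauto.
  - destruct gs; simpl in Hl; try lia. exists t. split; [auto | apply runit_nat].
  - simpl in Hl. cbn [absorb canon evL1].
    destruct (IHk1 _ _ _ (firstn (nphi k1) gs) Ht ltac:(rewrite length_firstn; lia)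
                (sorted_from_firstn _ _ _ Hs)) as [t1 [H1 E1]].
    destruct (IHk2 _ _ _ (skipn (nphi k1) gs) H1 ltac:(rewrite length_skipn; lia))
      as [t2 [H2 E2]].
    { rewrite depth_absorb; [apply sorted_from_skipn; auto | | apply sorted_from_firstn; auto].
      rewrite length_firstn. lia. }
    exists t2. split; auto.
    rewrite <- hcomp_id, !vcompA, <- (vcompA (t ** _)), assoc_inv_nat, !vcompA.
    rewrite <- (vcompA ((t ** _) ** _)), <- whisk_r, E1, whisk_r, !vcompA, E2. reflexivity.
Qed.

Definition natural_cell {a b} {l l' : LWord (UG C) a b} (phi : LCell l l') : Prop :=
  forall (S : Stack a) gs, length gs = nphi l' -> sorted_from (depth S - 1) gs ->
  exists t, StructCell (absorb l S (pullback phi gs)) (absorb l' S gs) t /\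
    (id2 (stack_hom S) ** evL2 F phi) >> canon l' S gs = canon l S (pullback phi gs) >> t.

Lemma natural_id {a b} (l : LWord (UG C) a b) : natural_cell (lc_id _ _ _ l).
Proof.
  intros S gs Hl Hs. rewrite pullback_structural by auto.
  exists (id2 _). split; [apply StructCell_refl|].
  simpl. rewrite hcomp_id, vcomp1l, vcomp1r. reflexivity.
Qed.

Lemma natural_vcomp {a b} {l l' l'' : LWord (UG C) a b} (x : LCell l l') (y : LCell l' l'') :
  natural_cell x -> natural_cell y -> natural_cell (lc_v _ _ _ _ _ _ x y).
Proof.
  intros IHx IHy S gs Hl Hs.
  destruct (IHy S gs Hl Hs) as [ty [Hy Ey]].
  destruct (IHx S (pullback y gs) (pullback_length _ _ _ _ _ _ _)
              (pullback_sorted _ _ _ _ _ _ _ _ Hl Hs)) as [tx [Hx Ex]].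
  rewrite pullback_vcomp. exists (tx >> ty). split; [eapply StructCell_comp; eauto|].
  simpl. rewrite whisk_l, vcompA, Ey, <- vcompA, Ex, vcompA. reflexivity.
Qed.

Lemma natural_hcomp {a b c} {l l' : LWord (UG C) a b} {k k' : LWord (UG C) b c}
  (x : LCell l l') (y : LCell k k') :
  natural_cell x -> natural_cell y -> natural_cell (lc_h _ _ _ _ _ _ _ _ x y).
Proof.
  intros IHx IHy S gs Hl Hs. simpl in Hl. cbn [absorb canon evL2].
  rewrite pullback_hcomp_firstn, pullback_hcomp_skipn.
  set (gl := firstn (nphi l') gs). set (gk := skipn (nphi l') gs).
  assert (Hgl : length gl = nphi l') by (unfold gl; rewrite length_firstn; lia).
  assert (Hgk : length gk = nphi k') by (unfold gk; rewrite length_skipn; lia).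
  destruct (IHx S gl Hgl (sorted_from_firstn _ _ _ Hs)) as [tx [Hx Ex]].
  assert (Hsk : sorted_from (depth (absorb l' S gl) - 1) gk).
  { rewrite depth_absorb; auto. apply sorted_from_skipn; auto. apply sorted_from_firstn; auto. }
  destruct (canon_struct_nat _ _ k' _ _ _ gk Hx Hgk Hsk) as [t3 [H3 E3]].
  destruct (IHy (absorb l S (pullback x gl)) gk Hgk) as [ty [Hy Ey]].
  { eapply sorted_from_weaken; [|exact Hsk]. apply StructCell_depth in Hx. lia. }
  exists (ty >> t3). split; [eapply StructCell_comp; eauto|].
  cbn [evL1]. rewrite !vcompA, <- (vcompA (id2 _ ** _)), assoc_inv_nat.
  rewrite (split_lr (id2 (stack_hom S) ** evL2 F x)), !vcompA.
  rewrite <- (vcompA (id2 _ ** evL2 F y)), <- whisk_commute, !vcompA.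
  rewrite <- (vcompA ((id2 _ ** evL2 F x) ** _)), <- whisk_r, Ex, whisk_r, !vcompA.
  rewrite <- (vcompA (tx ** _)), whisk_commute, !vcompA, E3.
  rewrite <- (vcompA (id2 _ ** evL2 F y)), Ey, !vcompA. reflexivity.
Qed.

Lemma natural_assoc {a b c d} (l : LWord (UG C) a b) (k : LWord (UG C) b c)
  (j : LWord (UG C) c d) : natural_cell (lc_assoc _ _ _ _ _ l k j).
Proof.
  intros S gs Hl Hs. simpl in Hl. rewrite pullback_structural by (auto; simpl; lia).
  cbn [absorb canon evL2 nphi].
  destruct (firstn_skipn_assoc gs (nphi l) (nphi k)) as [E1 [E2 E3]]. rewrite E1, E2, E3.
  exists (id2 _). split; [apply StructCell_refl|]. rewrite vcomp1r. apply absorb_assoc.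
Qed.

Lemma natural_assoc_inv {a b c d} (l : LWord (UG C) a b) (k : LWord (UG C) b c)
  (j : LWord (UG C) c d) : natural_cell (lc_assoc_inv _ _ _ _ _ l k j).
Proof.
  intros S gs Hl Hs. simpl in Hl. rewrite pullback_structural by (auto; simpl; lia).
  cbn [absorb canon evL2 nphi].
  destruct (firstn_skipn_assoc gs (nphi l) (nphi k)) as [E1 [E2 E3]]. rewrite E1, E2, E3.
  exists (id2 _). split; [apply StructCell_refl|]. rewrite vcomp1r. apply absorb_assoc_inv.
Qed.

Lemma natural_lunit {a b} (l : LWord (UG C) a b) : natural_cell (lc_lunit _ _ _ l).
Proof.
  intros S gs Hl Hs. rewrite pullback_structural by auto.
  exists (id2 _). split; [apply StructCell_refl|].
  cbn [absorb canon evL2 nphi firstn skipn]. rewrite vcomp1r. apply absorb_lunit.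
Qed.

Lemma natural_lunit_inv {a b} (l : LWord (UG C) a b) : natural_cell (lc_lunit_inv _ _ _ l).
Proof.
  intros S gs Hl Hs. rewrite pullback_structural by auto.
  exists (id2 _). split; [apply StructCell_refl|].
  cbn [absorb canon evL2 nphi firstn skipn]. rewrite vcomp1r. apply absorb_lunit_inv.
Qed.

Lemma natural_runit {a b} (l : LWord (UG C) a b) : natural_cell (lc_runit _ _ _ l).
Proof.
  intros S gs Hl Hs. rewrite pullback_structural by (auto; simpl; lia).
  cbn [absorb canon evL2 nphi]. rewrite firstn_all2 by lia.
  exists (id2 _). split; [apply StructCell_refl|]. rewrite vcomp1r. apply absorb_runit.
Qed.

Lemma natural_runit_inv {a b} (l : LWord (UG C) a b) : natural_cell (lc_runit_inv _ _ _ l).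
Proof.
  intros S gs Hl Hs. simpl in Hl. rewrite pullback_structural by (auto; simpl; lia).
  cbn [absorb canon evL2 nphi]. rewrite firstn_all2 by lia.
  exists (id2 _). split; [apply StructCell_refl|]. rewrite vcomp1r. apply absorb_runit_inv.
Qed.

(** [Φ(x)] acts on one Φ-term and keeps its group index. *)
Lemma natural_Phi {a b} {w w' : FWord (UG C) a b} (x : FCell w w') :
  natural_cell (lc_Phi _ _ _ w w' x).
Proof.
  intros S [|g [|g' gs]] Hl Hs; simpl in Hl; try lia. simpl in Hs.
  change (pullback (lc_Phi _ _ _ w w' x) [g]) with [g]. cbn [absorb canon evL2 hd].
  destruct (le_lt_dec (depth S) g) as [H|H].
  - pose proof (push_new S w' g H) as E1. pose proof (push_new S w g H) as E2.
    rewrite_push S w' g E1. rewrite_push S w g E2.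
    exists (id2 _ ** FX x). split; [apply sc_group, gc_snoc, GroupCell_refl|].
    symmetry. apply whisk_commute.
  - destruct S as [|b' c' p c0]; [simpl in H; lia|].
    pose proof (push_merge p c0 w' g H) as E1. pose proof (push_merge p c0 w g H) as E2.
    rewrite_push (ssnoc p c0) w' g E1. rewrite_push (ssnoc p c0) w g E2.
    exists (id2 _ ** FX (fc_h _ _ _ _ _ _ _ _ (fc_id _ _ _ c0) x)).
    split; [apply sc_group, gc_snoc, GroupCell_refl | apply phi_merge].
Qed.

(** [i] creates a Φ-term [Φ(I)]: either a new unit group or a unit merged
    into the last group. *)
Lemma natural_i (a : ob C) : natural_cell (lc_i (UG C) a).
Proof.
  intros S [|g [|g' gs]] Hl Hs; simpl in Hl; try lia. simpl in Hs.
  change (pullback (lc_i (UG C) a) [g]) with (@nil nat). cbn [absorb canon evL2 hd].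
  destruct (le_lt_dec (depth S) g) as [H|H].
  - pose proof (push_new S (funit (G:=UG C) a) g H) as E1.
    rewrite_push S (funit (G:=UG C) a) g E1.
    eexists. split; [apply sc_unit, StructCell_pad | apply unit_new].
  - destruct S as [|b' c' p c0]; [simpl in H; lia|].
    pose proof (push_merge p c0 (funit (G:=UG C) c') g H) as E1.
    rewrite_push (ssnoc p c0) (funit (G:=UG C) c') g E1.
    exists (id2 _ ** FX (fc_runit_inv _ _ _ c0)).
    split; [apply sc_group, gc_snoc, GroupCell_refl | apply unit_merge].
Qed.

(** [m] merges two Φ-terms, which therefore receive the same group index. *)
Lemma natural_m {a b c} (w : FWord (UG C) a b) (v : FWord (UG C) b c) :
  natural_cell (lc_m _ _ _ _ w v).
Proof.
  intros S [|g [|g' gs]] Hl Hs; simpl in Hl; try lia. simpl in Hs.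
  change (pullback (lc_m _ _ _ _ w v) [g]) with [g; g].
  cbn [absorb canon evL2 hd firstn skipn nphi].
  destruct (le_lt_dec (depth S) g) as [H|H].
  - pose proof (push_new S (fcomp w v) g H) as E1. rewrite_push S (fcomp w v) g E1.
    pose proof (push_new S w g H) as E2. rewrite_push S w g E2.
    pose proof (push_merge (pad (g - depth S) S) w v g ltac:(rewrite depth_pad; lia)) as E3.
    rewrite_push (ssnoc (pad (g - depth S) S) w) v g E3.
    exists (id2 _). split; [apply StructCell_refl | apply mult_new].
  - destruct S as [|b' c' p c0]; [simpl in H; lia|].
    pose proof (push_merge p c0 (fcomp w v) g H) as E1.
    rewrite_push (ssnoc p c0) (fcomp w v) g E1.
    pose proof (push_merge p c0 w g H) as E2. rewrite_push (ssnoc p c0) w g E2.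
    pose proof (push_merge p (fcomp c0 w) v g H) as E3.
    rewrite_push (ssnoc p (fcomp c0 w)) v g E3.
    exists (id2 _ ** FX (fc_assoc _ _ _ _ _ c0 w v)).
    split; [apply sc_group, gc_snoc, GroupCell_refl | apply mult_merge].
Qed.

Lemma canon_natural : forall a b (l l' : LWord (UG C) a b) (phi : LCell l l'), natural_cell phi.
Proof.
  induction phi.
  - apply natural_id.
  - apply natural_vcomp; auto.
  - apply natural_hcomp; auto.
  - apply natural_assoc.
  - apply natural_assoc_inv.
  - apply natural_lunit.
  - apply natural_lunit_inv.
  - apply natural_runit.
  - apply natural_runit_inv.
  - apply natural_Phi.
  - apply natural_i.
  - apply natural_m.
Qed.

(** With the group indices [depth S, depth S + 1, ...] every Φ-term starts
    a new group; the normalizing cell is then split monic. *)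
Lemma depth_absorb_seq : forall a b (l : LWord (UG C) a b) (S : Stack a),
  depth (absorb l S (seq (depth S) (nphi l))) = depth S + nphi l.
Proof.
  induction l; intros S.
  - cbn [absorb nphi seq hd].
    pose proof (f_equal (@projT1 _ _) (push_new S f (depth S) (le_n _))) as E.
    cbn [projT1] in E. rewrite E. simpl. rewrite depth_pad. lia.
  - simpl. lia.
  - cbn [absorb nphi]. destruct (seq_split (depth S) (nphi l1) (nphi l2)) as [E1 E2].
    rewrite E1, E2, <- IHl1, IHl2, IHl1. lia.
Qed.

Lemma canon_split_mono : forall a b (l : LWord (UG C) a b) (S : Stack a),
  exists r, canon l S (seq (depth S) (nphi l)) >> r = id2 _.
Proof.
  induction l; intros S.
  - cbn [absorb canon nphi seq hd]. pose proof (push_new S f (depth S) (le_n _)) as E.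
    rewrite_push S f (depth S) E. rewrite Nat.sub_diag. simpl. rewrite hcomp_id.
    exists (id2 _). apply vcomp1l.
  - cbn [canon]. exists (runit_inv _). apply runit_inv_l.
  - cbn [absorb canon nphi]. destruct (seq_split (depth S) (nphi l1) (nphi l2)) as [E1 E2].
    rewrite E1, E2, <- (depth_absorb_seq _ _ l1 S).
    destruct (IHl1 S) as [r1 H1].
    destruct (IHl2 (absorb l1 S (seq (depth S) (nphi l1)))) as [r2 H2].
    eexists. apply split_mono_comp; eauto.
Qed.

End LaxNormalForm.

(** The lax case of the theorem: normalize both sides starting from the empty
    stack with the group indices [0, 1, ..., nphi l' - 1]; equal supporting
    maps give the same pulled-back indices, the structural cells agree by
    uniqueness, and the normalizing cell is split monic. *)
Theorem lax_coherence (C D : Bicat) (F : LaxFunctor C D) (a b : ob C)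
  (l l' : LWord (UG C) a b) (phi psi : LCell l l') :
  (forall i, i < nphi l -> supp phi i = supp psi i) -> evL2 F phi = evL2 F psi.
Proof.
  intro Hsupp. set (gs := seq 0 (nphi l')).
  assert (Hl : length gs = nphi l') by apply length_seq.
  assert (Hs : sorted_from (depth a (snil a) - 1) gs) by (apply sorted_from_seq; simpl; lia).
  destruct (canon_natural F a _ _ l l' phi (snil a) gs Hl Hs) as [t1 [H1 E1]].
  destruct (canon_natural F a _ _ l l' psi (snil a) gs Hl Hs) as [t2 [H2 E2]].
  assert (Ep : pullback phi gs = pullback psi gs).
  { unfold pullback. apply map_ext_in. intros i Hi. apply in_seq in Hi.
    rewrite Hsupp by lia. reflexivity. }
  revert t1 H1 E1. rewrite Ep. intros t1 H1 E1.
  rewrite (StructCell_unique F a _ _ _ _ H1 _ H2), <- E2 in E1.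
  destruct (canon_split_mono F a _ _ l' (snil a)) as [r Hr]. cbn [depth] in Hr.
  apply whisk_l_id_faithful.
  transitivity ((id2 (stack_hom F a (snil a)) ** evL2 F phi) >> canon F a l' (snil a) gs >> r).
  - rewrite vcompA. unfold gs. rewrite Hr, vcomp1r. reflexivity.
  - rewrite E1, vcompA. unfold gs. rewrite Hr, vcomp1r. reflexivity.
Qed.

(** ** The oplax case, by duality

    [co_bicat B] reverses the 2-cells of [B]; an oplax functor [C -> D] is a
    lax functor [co_bicat C -> co_bicat D].  Reversing a 2-cell term of the
    oplax free construction gives a lax one with the same supporting map
    (read in Δ^op), and the two interpretations agree up to the propositional
    identification of their 1-cells. *)
Definition co_bicat (B : Bicat) : Bicat.
Proof.
  refine {| ob := ob B; hom := hom B; cell := fun a b f g => cell g f;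
            id2 := fun a b f => id2 f; vcomp := fun a b f g h x y => vcomp y x;
            id1 := fun a => id1 a; hcomp1 := fun a b c f g => hcomp1 f g;
            hcomp2 := fun a b c f f' g g' x y => hcomp2 x y;
            assoc := fun a b c d f g h => assoc_inv f g h;
            assoc_inv := fun a b c d f g h => assoc f g h;
            lunit := fun a b f => lunit_inv f; lunit_inv := fun a b f => lunit f;
            runit := fun a b f => runit_inv f; runit_inv := fun a b f => runit f |}.
  - intros. apply vcomp1r.
  - intros. apply vcomp1l.
  - intros. symmetry. apply vcompA.
  - intros. apply hcomp_id.
  - intros. apply interchange2.
  - intros. symmetry. apply assoc_inv_nat.
  - intros. symmetry. apply lunit_inv_nat.
  - intros. symmetry. apply runit_inv_nat.
  - intros. apply assoc_inv_l.
  - intros. apply assoc_inv_r.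
  - intros. apply lunit_inv_l.
  - intros. apply lunit_inv_r.
  - intros. apply runit_inv_l.
  - intros. apply runit_inv_r.
  - intros. simpl. rewrite pentagon_inv, !vcompA. reflexivity.
  - intros. simpl. rewrite <- triangle_inv, vcompA, assoc_inv_l, vcomp1r. reflexivity.
Defined.

Definition co_lax {C D : Bicat} (G : OplaxFunctor C D) : LaxFunctor (co_bicat C) (co_bicat D).
Proof.
  refine (@Build_LaxFunctor (co_bicat C) (co_bicat D) (oF0 G) (fun a b f => oF1 G f)
    (fun a b f g x => oF2 G x) _ _ (fun a => oplax_i G a) (fun a b c f g => oplax_m G f g)
    _ _ _ _).
  - intros. exact (oF2_id G f).
  - intros. exact (oF2_comp G y x).
  - intros. cbn in *. symmetry. apply (oplax_m_nat G).
  - intros. cbn.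
    change (ob C) in a, b, c, d.
    change (hom C a b) in f. change (hom C b c) in g. change (hom C c d) in h.
    assert (K : oplax_m G (hcomp1 f g) h >> (oplax_m G f g ** id2 (oF1 G h)) =
      oF2 G (assoc f g h) >> oplax_m G f (hcomp1 g h) >> (id2 (oF1 G f) ** oplax_m G g h)
        >> assoc_inv _ _ _).
    { rewrite (oplax_assoc G f g h), !vcompA, assoc_inv_l, vcomp1r. reflexivity. }
    rewrite K, !vcompA, <- (vcompA (oF2 G _)), <- oF2_comp, assoc_inv_r, oF2_id, vcomp1l.
    reflexivity.
  - intros. cbn. rewrite <- oplax_lunit, !vcompA. reflexivity.
  - intros. cbn. rewrite <- oplax_runit, !vcompA. reflexivity.
Defined.

Fixpoint fcell_rev {G : Graph} {a b : vert G} {w w' : FWord G a b} (x : FCell w w') : FCell w' w :=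
  match x in @FCell _ a b w w' return FCell w' w with
  | fc_id _ _ _ w => fc_id _ _ _ w
  | fc_v _ _ _ _ _ _ x y => fc_v _ _ _ _ _ _ (fcell_rev y) (fcell_rev x)
  | fc_h _ _ _ _ _ _ _ _ x y => fc_h _ _ _ _ _ _ _ _ (fcell_rev x) (fcell_rev y)
  | fc_assoc _ _ _ _ _ w v u => fc_assoc_inv _ _ _ _ _ w v u
  | fc_assoc_inv _ _ _ _ _ w v u => fc_assoc _ _ _ _ _ w v u
  | fc_lunit _ _ _ w => fc_lunit_inv _ _ _ w
  | fc_lunit_inv _ _ _ w => fc_lunit _ _ _ w
  | fc_runit _ _ _ w => fc_runit_inv _ _ _ w
  | fc_runit_inv _ _ _ w => fc_runit _ _ _ w
  end.

Fixpoint lcell_rev {G : Graph} {a b : vert G} {l l' : LWord G a b} (x : LCellOp l l')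
  : LCell l' l :=
  match x in @LCellOp _ a b l l' return LCell l' l with
  | lo_id _ _ _ l => lc_id _ _ _ l
  | lo_v _ _ _ _ _ _ x y => lc_v _ _ _ _ _ _ (lcell_rev y) (lcell_rev x)
  | lo_h _ _ _ _ _ _ _ _ x y => lc_h _ _ _ _ _ _ _ _ (lcell_rev x) (lcell_rev y)
  | lo_assoc _ _ _ _ _ l k j => lc_assoc_inv _ _ _ _ _ l k j
  | lo_assoc_inv _ _ _ _ _ l k j => lc_assoc _ _ _ _ _ l k j
  | lo_lunit _ _ _ l => lc_lunit_inv _ _ _ l
  | lo_lunit_inv _ _ _ l => lc_lunit _ _ _ l
  | lo_runit _ _ _ l => lc_runit_inv _ _ _ l
  | lo_runit_inv _ _ _ l => lc_runit _ _ _ l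
  | lo_Phi _ _ _ w w' x => lc_Phi _ _ _ w' w (fcell_rev x)
  | lo_i _ a => lc_i _ a
  | lo_m _ _ _ _ w v => lc_m _ _ _ _ w v
  end.

Lemma supp_lcell_rev : forall G a b (l l' : LWord G a b) (x : LCellOp l l') i,
  supp (lcell_rev x) i = suppOp x i.
Proof. induction x; intros; simpl; try rewrite IHx1, IHx2; auto. Qed.

Definition transport {B : Bicat} {a b} {X X' Y Y' : hom B a b} (e1 : X = X') (e2 : Y = Y')
  (x : cell X Y) : cell X' Y' :=
  match e1 in _ = Z return cell Z Y' with
  | eq_refl => match e2 in _ = Z return cell X Z with eq_refl => x end
  end.

Section Transport.
Context {B : Bicat}.

Lemma transport_refl {a b} {X Y : hom B a b} (e1 : X = X) (e2 : Y = Y) (x : cell X Y) :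
  transport e1 e2 x = x.
Proof. rewrite (proof_irrelevance _ e1 eq_refl), (proof_irrelevance _ e2 eq_refl). reflexivity. Qed.

Lemma transport_vcomp {a b} {X X' Y Y' Z Z' : hom B a b} (e1 : X = X') (e2 : Y = Y') (e3 : Z = Z')
  (x : cell X Y) (y : cell Y Z) : transport e1 e3 (x >> y) = transport e1 e2 x >> transport e2 e3 y.
Proof. destruct e1, e2, e3. reflexivity. Qed.

Lemma transport_hcomp {a b c} {X X' Y Y' : hom B a b} {Z Z' W W' : hom B b c}
  (eX : X = X') (eY : Y = Y') (eZ : Z = Z') (eW : W = W')
  (e1 : hcomp1 X Z = hcomp1 X' Z') (e2 : hcomp1 Y W = hcomp1 Y' W') (x : cell X Y) (y : cell Z W) :
  transport e1 e2 (x ** y) = transport eX eY x ** transport eZ eW y.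
Proof. destruct eX, eY, eZ, eW. rewrite transport_refl. reflexivity. Qed.

Lemma transport_id {a b} {X X' : hom B a b} (e1 e2 : X = X') : transport e1 e2 (id2 X) = id2 X'.
Proof. destruct e1. rewrite transport_refl. reflexivity. Qed.

Lemma transport_assoc {a b c d} {X X' : hom B a b} {Y Y' : hom B b c} {Z Z' : hom B c d}
  (eX : X = X') (eY : Y = Y') (eZ : Z = Z') e1 e2 :
  transport e1 e2 (assoc X Y Z) = assoc X' Y' Z'.
Proof. destruct eX, eY, eZ. apply transport_refl. Qed.

Lemma transport_assoc_inv {a b c d} {X X' : hom B a b} {Y Y' : hom B b c} {Z Z' : hom B c d}
  (eX : X = X') (eY : Y = Y') (eZ : Z = Z') e1 e2 :
  transport e1 e2 (assoc_inv X Y Z) = assoc_inv X' Y' Z'.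
Proof. destruct eX, eY, eZ. apply transport_refl. Qed.

Lemma transport_lunit {a b} {X X' : hom B a b} (eX : X = X') e1 e2 :
  transport e1 e2 (lunit X) = lunit X'.
Proof. destruct eX. apply transport_refl. Qed.

Lemma transport_lunit_inv {a b} {X X' : hom B a b} (eX : X = X') e1 e2 :
  transport e1 e2 (lunit_inv X) = lunit_inv X'.
Proof. destruct eX. apply transport_refl. Qed.

Lemma transport_runit {a b} {X X' : hom B a b} (eX : X = X') e1 e2 :
  transport e1 e2 (runit X) = runit X'.
Proof. destruct eX. apply transport_refl. Qed.

Lemma transport_runit_inv {a b} {X X' : hom B a b} (eX : X = X') e1 e2 :
  transport e1 e2 (runit_inv X) = runit_inv X'.
Proof. destruct eX. apply transport_refl. Qed.

End Transport.

Section Duality.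
Context {C D : Bicat} (G : OplaxFunctor C D).

Lemma evF1_co : forall a b (w : FWord (UG C) a b), evF1 (C:=co_bicat C) w = evF1 (C:=C) w.
Proof. induction w; simpl; auto. rewrite IHw1, IHw2. reflexivity. Qed.

Lemma evF2_co : forall a b (w w' : FWord (UG C) a b) (x : FCell w w'),
  @transport C _ _ _ _ _ _ (evF1_co _ _ w) (evF1_co _ _ w') (evF2 (C:=co_bicat C) (fcell_rev x))
  = evF2 (C:=C) x.
Proof.
  induction x; cbn [fcell_rev evF2]; cbn.
  - apply transport_id.
  - rewrite (transport_vcomp (B:=C) (evF1_co _ _ w) (evF1_co _ _ w') (evF1_co _ _ w'')), IHx1, IHx2.
    reflexivity.
  - erewrite transport_hcomp, IHx1, IHx2. reflexivity.
  - apply (transport_assoc (B:=C) (evF1_co _ _ w) (evF1_co _ _ v) (evF1_co _ _ x)).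
  - apply (transport_assoc_inv (B:=C) (evF1_co _ _ w) (evF1_co _ _ v) (evF1_co _ _ x)).
  - apply (transport_lunit (B:=C) (evF1_co _ _ w)).
  - apply (transport_lunit_inv (B:=C) (evF1_co _ _ w)).
  - apply (transport_runit (B:=C) (evF1_co _ _ w)).
  - apply (transport_runit_inv (B:=C) (evF1_co _ _ w)).
Qed.

Lemma transport_oF2 {a b} {A A' B0 B' : hom C a b} (eA : A = A') (eB : B0 = B') e1 e2
  (x : cell A B0) :
  @transport D _ _ _ _ _ _ e1 e2 (oF2 G x) = oF2 G (@transport C _ _ _ _ _ _ eA eB x).
Proof. destruct eA, eB. rewrite !transport_refl. reflexivity. Qed.

Lemma transport_oplax_m {a b c} {f f' : hom C a b} {g g' : hom C b c} (ef : f = f') (eg : g = g')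
  e1 e2 : @transport D _ _ _ _ _ _ e1 e2 (oplax_m G f g) = oplax_m G f' g'.
Proof. destruct ef, eg. apply transport_refl. Qed.

Lemma evL1_co : forall a b (l : LWord (UG C) a b), evL1 (co_lax G) l = evLo1 G l.
Proof.
  induction l; cbn; auto.
  - rewrite evF1_co. reflexivity.
  - rewrite IHl1, IHl2. reflexivity.
Qed.

Lemma evL2_co : forall a b (l l' : LWord (UG C) a b) (x : LCellOp l l'),
  @transport D _ _ _ _ _ _ (evL1_co _ _ l) (evL1_co _ _ l') (evL2 (co_lax G) (lcell_rev x))
  = evLo2 G x.
Proof.
  induction x; cbn [lcell_rev evL2 evLo2].
  - exact (transport_id (B:=D) _ _).
  - cbn. rewrite (transport_vcomp (B:=D) (evL1_co _ _ l) (evL1_co _ _ l') (evL1_co _ _ l'')).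
    rewrite IHx1, IHx2. reflexivity.
  - cbn. erewrite (transport_hcomp (B:=D) (evL1_co _ _ l) (evL1_co _ _ l') (evL1_co _ _ k)
      (evL1_co _ _ k')), IHx1, IHx2. reflexivity.
  - apply (transport_assoc (B:=D) (evL1_co _ _ l) (evL1_co _ _ k) (evL1_co _ _ j)).
  - apply (transport_assoc_inv (B:=D) (evL1_co _ _ l) (evL1_co _ _ k) (evL1_co _ _ j)).
  - apply (transport_lunit (B:=D) (evL1_co _ _ l)).
  - apply (transport_lunit_inv (B:=D) (evL1_co _ _ l)).
  - apply (transport_runit (B:=D) (evL1_co _ _ l)).
  - apply (transport_runit_inv (B:=D) (evL1_co _ _ l)).
  - cbn. rewrite (transport_oF2 (evF1_co _ _ w) (evF1_co _ _ w')), evF2_co. reflexivity.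
  - apply transport_refl.
  - cbn. apply (transport_oplax_m (evF1_co _ _ w) (evF1_co _ _ v)).
Qed.

End Duality.

Theorem oplax_coherence (C D : Bicat) (G : OplaxFunctor C D) (a b : ob C)
  (l l' : LWord (UG C) a b) (phi psi : LCellOp l l') :
  (forall i, i < nphi l' -> suppOp phi i = suppOp psi i) -> evLo2 G phi = evLo2 G psi.
Proof.
  intro Hsupp.
  assert (E : evL2 (co_lax G) (lcell_rev phi) = evL2 (co_lax G) (lcell_rev psi)).
  { apply (lax_coherence (co_bicat C) (co_bicat D) (co_lax G) a b l' l).
    intros i Hi. rewrite !supp_lcell_rev. auto. }
  rewrite <- (evL2_co G _ _ _ _ phi), <- (evL2_co G _ _ _ _ psi), E. reflexivity.
Qed.

Theorem mainTheorem6 :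
  (forall (C D : Bicat) (F : LaxFunctor C D) (a b : ob C)
     (l l' : LWord (UG C) a b) (phi psi : LCell l l'),
     (forall i, i < nphi l -> supp phi i = supp psi i) ->
     evL2 F phi = evL2 F psi)
  /\
  (forall (C D : Bicat) (F : OplaxFunctor C D) (a b : ob C)
     (l l' : LWord (UG C) a b) (phi psi : LCellOp l l'),
     (forall i, i < nphi l' -> suppOp phi i = suppOp psi i) ->
     evLo2 F phi = evLo2 F psi).
Proof. split; [exact lax_coherence | exact oplax_coherence]. Qed.
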